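(* Let $p\geq3$, $\lambda=\lambda_p=2\cos(\pi/p)$, and for real $x$ define $\rho(x)=TS^{-r(x)}(x)=\frac{1}{r(x)\lambda-x}$ where $r(x)=\lfloor x/\lambda\rfloor+1$. Then: (i) for every hyperbolic fixed point $\alpha$ of $G_p$ there is $n\ge0$ such that $\rho^n(\alpha)$ is $G_p$-reduced; (ii) $\rho$ maps $G_p$-reduced numbers to $G_p$-reduced numbers, and every $G_p$-reduced $\beta$ satisfies $\rho^m(\beta)=\beta$ for some $m\ge1$, so the reduced numbers fall into disjoint $\rho$-cycles; (iii) if $\beta,\gamma$ are $G_p$-reduced and $\gamma=V\beta$ for some $V\in G_p$, then $\gamma=\rho^n(\beta)$ for some $n\ge0$. Consequently each $G_p$-equivalence class of hyperbolic fixed points contains exactly one cycle of $G_p$-reduced numbers.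
   Context: Let $S=\begin{pmatrix}1&\lambda\\0&1\end{pmatrix}$, $T=\begin{pmatrix}0&-1\\1&0\end{pmatrix}$, and $G_p=\langle S,T\rangle/\{\pm I\}$ acting on $\mathbb{R}\cup\{\infty\}$ by linear fractional transformations. A hyperbolic fixed point is a real number fixed by an element of $G_p$ with $|{\rm trace}|>2$; two such points $\alpha,\beta$ are $G_p$-equivalent if $\beta=V\alpha$ for some $V\in G_p$. The $\lambda$-continued fraction of a real $\alpha$: $\alpha_0=\alpha$, $r_j=\lfloor\alpha_j/\lambda\rfloor+1$, $\alpha_{j+1}=\frac{1}{r_j\lambda-\alpha_j}$, so $\alpha=r_0\lambda-\cfrac{1}{r_1\lambda-\cfrac{1}{r_2\lambda-\cdots}}$. A real number is $G_p$-reduced if its $\lambda$-continued fraction is purely periodic with period other than $(2,1,\dots,1)$ with $p-3$ ones. *)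

From Stdlib Require Import Reals Lra.
Open Scope R_scope.

Definition lam (p : nat) : R := 2 * cos (PI / INR p).

Record mat2 := Mat2 { ma : R; mb : R; mc : R; md : R }.

Definition mmul (M N : mat2) : mat2 :=
  Mat2 (ma M * ma N + mb M * mc N) (ma M * mb N + mb M * md N)
       (mc M * ma N + md M * mc N) (mc M * mb N + md M * md N).

Definition mid : mat2 := Mat2 1 0 0 1.
Definition Smat (p : nat) : mat2 := Mat2 1 (lam p) 0 1.
Definition Sinv (p : nat) : mat2 := Mat2 1 (- lam p) 0 1.
Definition Tmat : mat2 := Mat2 0 (-1) 1 0.
Definition Tinv : mat2 := Mat2 0 1 (-1) 0.

(* G_p is the image of this
   group modulo {+-I}; since M and -M act identically and have traces of equal
   absolute value, we work with matrix representatives. *)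
Inductive inGp (p : nat) : mat2 -> Prop :=
  | Gp_id : inGp p mid
  | Gp_S M : inGp p M -> inGp p (mmul (Smat p) M)
  | Gp_Sinv M : inGp p M -> inGp p (mmul (Sinv p) M)
  | Gp_T M : inGp p M -> inGp p (mmul Tmat M)
  | Gp_Tinv M : inGp p M -> inGp p (mmul Tinv M).

Definition trace (M : mat2) : R := ma M + md M.

Definition maps_to (M : mat2) (x y : R) : Prop :=
  mc M * x + md M <> 0 /\ y = (ma M * x + mb M) / (mc M * x + md M).

Definition hyperbolic_fixed_point (p : nat) (a : R) : Prop :=
  exists M, inGp p M /\ Rabs (trace M) > 2 /\ maps_to M a a.

Definition Gp_equiv (p : nat) (a b : R) : Prop :=
  exists V, inGp p V /\ maps_to V a b.

(* floor via Stdlib's Int_part (Int_part x = up x - 1 = floor x) *)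
Definition rdigit (p : nat) (x : R) : Z := (Int_part (x / lam p) + 1)%Z.

Definition rho (p : nat) (x : R) : R := 1 / (IZR (rdigit p x) * lam p - x).

Fixpoint rho_iter (p : nat) (n : nat) (x : R) : R :=
  match n with O => x | S k => rho p (rho_iter p k x) end.

Definition cf_digit (p : nat) (x : R) (j : nat) : Z := rdigit p (rho_iter p j x).

Definition purely_periodic (p : nat) (x : R) : Prop :=
  exists k : nat, (1 <= k)%nat /\ forall j, cf_digit p x (j + k) = cf_digit p x j.

Definition special_period (p : nat) (x : R) : Prop :=
  exists c : nat, (c < p - 2)%nat /\
    forall j, cf_digit p x j = (if Nat.eqb (j mod (p - 2)) c then 2 else 1)%Z.

Definition Gp_reduced (p : nat) (x : R) : Prop :=
  purely_periodic p x /\ ~ special_period p x.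

From Stdlib Require Import Reals Lra Lia ZArith Arith Classical.
Open Scope R_scope.

(* The key fact is a Serret-type theorem for the lambda-continued fraction: for [V] in [G_p]
   the rho-orbits of [x] and [V x] eventually coincide, and [V] is, up to sign, the quotient
   of the products of continued-fraction steps along the two orbits.  It suffices to check
   this for the generators; the hard case [T] uses [E = T S^-1], which has order [p] up to
   sign and whose powers move points beyond [lam] through the orbit [0 -> 1/lam -> ... -> lam].
   (i) If [M] fixes [a], the orbit of [a] becomes periodic and [M] is conjugate, up to sign,
   to the matrix of one period, so [|tr M| > 2] rules out the parabolic cycle of [lam] and
   with it the special digit pattern.
   (ii) A reduced [b] has a digit [>= 2] among its first [p - 2], so some [b' = rho^s b >= lam].
   If the digits of [b'] have period [k], the matrix of [k] steps maps [[0, lam]] into itself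
   with an attracting fixed point below [lam], while the points [rho^(nk) b'] form an orbit
   of it that stays in [[lam, r_0 lam)]; hence [rho^k b' = b'], and so [rho^k b = b].
   (iii) Equivalent reduced numbers have merging orbits, and both orbits are cycles. *)

(* [cheb l n = U_(n-1) (l / 2)], a Chebyshev polynomial of the second kind. *)
Fixpoint cheb (l : R) (n : nat) : R :=
  match n with
  | O => 0
  | S O => 1
  | S ((S m) as k) => l * cheb l k - cheb l m
  end.

Lemma cheb_SS l n : cheb l (S (S n)) = l * cheb l (S n) - cheb l n.
Proof. reflexivity. Qed.

Lemma cheb_cassini l n : cheb l (S n) * cheb l (S n) - cheb l n * cheb l (S (S n)) = 1.
Proof.
  induction n as [|n IH]; [simpl; ring|].
  rewrite (cheb_SS l (S n)). rewrite cheb_SS in IH. rewrite cheb_SS. nra.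
Qed.

Lemma cheb_cos t n : cheb (2 * cos t) n * sin t = sin (INR n * t).
Proof.
  induction n as [n IH] using (well_founded_induction lt_wf).
  destruct n as [|[|n]].
  - simpl. rewrite !Rmult_0_l, sin_0. ring.
  - simpl. rewrite !Rmult_1_l. reflexivity.
  - rewrite cheb_SS, !S_INR.
    replace ((2 * cos t * cheb (2 * cos t) (S n) - cheb (2 * cos t) n) * sin t)
      with (2 * cos t * (cheb (2 * cos t) (S n) * sin t) - cheb (2 * cos t) n * sin t) by ring.
    rewrite (IH (S n)), (IH n), S_INR by lia.
    replace ((INR n + 1 + 1) * t) with ((INR n + 1) * t + t) by ring.
    replace (INR n * t) with ((INR n + 1) * t - t) by ring.
    rewrite sin_plus, sin_minus. ring.
Qed.

Section Lambda.
Variable p : nat.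
Hypothesis hp : (3 <= p)%nat.

Let theta := PI / INR p.

Let INR_p_ge3 : 3 <= INR p.
Proof. replace 3 with (INR 3) by (simpl; lra). apply le_INR; lia. Qed.

Let theta_bounds : 0 < theta <= PI / 3.
Proof.
  pose proof PI_RGT_0. unfold theta. split.
  - apply Rdiv_lt_0_compat; lra.
  - apply Rmult_le_compat_l; [lra|]. apply Rinv_le_contravar; lra.
Qed.

Let INR_p_theta : INR p * theta = PI.
Proof. unfold theta. field. lra. Qed.

Let sin_theta_pos : 0 < sin theta.
Proof. pose proof PI_RGT_0. apply sin_gt_0; lra. Qed.

Lemma lam_ge1 : 1 <= lam p.
Proof.
  pose proof PI_RGT_0. unfold lam. fold theta.
  assert (Hcos : cos (PI / 3) <= cos theta) by (apply cos_decr_1; lra).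
  rewrite cos_PI3 in Hcos. lra.
Qed.

Lemma lam_pos : 0 < lam p.
Proof. pose proof lam_ge1; lra. Qed.

Let cheb_lam_sin n : cheb (lam p) n * sin theta = sin (INR n * theta).
Proof. apply cheb_cos. Qed.

Lemma cheb_lam_p : cheb (lam p) p = 0.
Proof.
  pose proof (cheb_lam_sin p) as H. rewrite INR_p_theta, sin_PI in H.
  apply Rmult_integral in H. destruct H; [auto | lra].
Qed.

Lemma cheb_lam_pred : cheb (lam p) (p - 1) = 1.
Proof.
  pose proof (cheb_lam_sin (p - 1)) as H. rewrite minus_INR in H by lia. simpl INR in H.
  replace ((INR p - 1) * theta) with (PI - theta) in H by (rewrite <- INR_p_theta; ring).
  rewrite sin_PI_x in H. apply (Rmult_eq_reg_r (sin theta)); lra.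
Qed.

Lemma cheb_lam_pos j : (1 <= j <= p - 1)%nat -> 0 < cheb (lam p) j.
Proof.
  intros Hj. pose proof (cheb_lam_sin j) as H.
  assert (0 < sin (INR j * theta)).
  { apply sin_gt_0.
    - apply Rmult_lt_0_compat; [apply lt_0_INR; lia | lra].
    - rewrite <- INR_p_theta. apply Rmult_lt_compat_r; [lra | apply lt_INR; lia]. }
  destruct (Rlt_le_dec 0 (cheb (lam p) j)); [auto | nra].
Qed.

Lemma cheb_lam_pred2 : cheb (lam p) (p - 2) = lam p.
Proof.
  assert (H : cheb (lam p) (S (S (p - 2))) = 0)
    by (replace (S (S (p - 2))) with p by lia; apply cheb_lam_p).
  rewrite cheb_SS in H.
  replace (S (p - 2)) with (p - 1)%nat in H by lia. rewrite cheb_lam_pred in H. lra.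
Qed.

Lemma cheb_lam_pred3 : cheb (lam p) (p - 3) = lam p * lam p - 1.
Proof.
  assert (H : cheb (lam p) (S (S (p - 3))) = 1)
    by (replace (S (S (p - 3))) with (p - 1)%nat by lia; apply cheb_lam_pred).
  rewrite cheb_SS in H.
  replace (S (p - 3)) with (p - 2)%nat in H by lia. rewrite cheb_lam_pred2 in H. lra.
Qed.

End Lambda.

Definition mdet (M : mat2) : R := ma M * md M - mb M * mc M.
Definition mscale (k : R) (M : mat2) : mat2 :=
  Mat2 (k * ma M) (k * mb M) (k * mc M) (k * md M).
Definition madj (M : mat2) : mat2 := Mat2 (md M) (- mb M) (- mc M) (ma M).

Fixpoint mpow (M : mat2) (n : nat) : mat2 :=
  match n with O => mid | S k => mmul M (mpow M k) end.

Ltac mat_ring :=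
  repeat match goal with M : mat2 |- _ => destruct M end;
  unfold mmul, mscale, madj, mid, Smat, Sinv, Tmat, Tinv in *; simpl in *; f_equal; ring.

Lemma mmul_assoc A B C : mmul A (mmul B C) = mmul (mmul A B) C.
Proof. mat_ring. Qed.
Lemma mmul_1l A : mmul mid A = A.
Proof. mat_ring. Qed.
Lemma mmul_1r A : mmul A mid = A.
Proof. mat_ring. Qed.
Lemma mmul_scale_l k A B : mmul (mscale k A) B = mscale k (mmul A B).
Proof. mat_ring. Qed.
Lemma mmul_scale_r k A B : mmul A (mscale k B) = mscale k (mmul A B).
Proof. mat_ring. Qed.
Lemma mscale_mscale k l A : mscale k (mscale l A) = mscale (k * l) A.
Proof. mat_ring. Qed.
Lemma mscale_1 A : mscale 1 A = A.
Proof. mat_ring. Qed.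
Lemma madj_mmul A : mmul (madj A) A = mscale (mdet A) mid.
Proof. unfold mdet. mat_ring. Qed.

Lemma mdet_mmul A B : mdet (mmul A B) = mdet A * mdet B.
Proof. destruct A, B; unfold mdet, mmul; simpl; ring. Qed.

Lemma mpow_Sr M n : mpow M (S n) = mmul (mpow M n) M.
Proof.
  induction n as [|n IH]; simpl; [rewrite mmul_1l, mmul_1r; auto|].
  rewrite IH at 1. apply mmul_assoc.
Qed.

Lemma mpow_add M a b : mpow M (a + b) = mmul (mpow M a) (mpow M b).
Proof. induction a as [|a IH]; simpl; [rewrite mmul_1l|rewrite IH, mmul_assoc]; auto. Qed.

Lemma mdet_mpow M n : mdet M = 1 -> mdet (mpow M n) = 1.
Proof.
  intros H; induction n as [|n IH]; simpl; [unfold mdet, mid; simpl; ring|].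
  rewrite mdet_mmul, H, IH; ring.
Qed.

Lemma trace_mscale k M : trace (mscale k M) = k * trace M.
Proof. destruct M; unfold trace, mscale; simpl; ring. Qed.

Lemma trace_madj M : trace (madj M) = trace M.
Proof. destruct M; unfold trace, madj; simpl; ring. Qed.

Lemma trace_conj A M X k :
  mdet A = 1 -> mmul A M = mscale k (mmul X A) -> trace M = k * trace X.
Proof.
  intros HA H.
  assert (HM : M = mmul (madj A) (mmul A M))
    by (rewrite mmul_assoc, madj_mmul, HA, mscale_1, mmul_1l; auto).
  rewrite HM, H, mmul_scale_r, trace_mscale, <- (Rmult_1_l (trace X)), <- HA.
  f_equal. destruct A, X; unfold mdet, trace, mmul, madj; simpl; ring.
Qed.

Definition is_sign (s : R) : Prop := s = 1 \/ s = -1.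

Lemma is_sign_mul s t : is_sign s -> is_sign t -> is_sign (s * t).
Proof. unfold is_sign; intros [-> | ->] [-> | ->]; lra. Qed.
Lemma is_sign_neq0 s : is_sign s -> s <> 0.
Proof. unfold is_sign; lra. Qed.
Lemma is_sign_sqr s : is_sign s -> s * s = 1.
Proof. unfold is_sign; intros [-> | ->]; lra. Qed.
Lemma is_sign_pow n : is_sign ((-1) ^ n).
Proof.
  induction n as [|n IH]; simpl; [left; ring|].
  destruct IH as [-> | ->]; [right | left]; ring.
Qed.
Lemma is_sign_opp s : is_sign s -> is_sign (- s).
Proof. unfold is_sign; intros [-> | ->]; [right | left]; ring. Qed.
Lemma is_sign_abs_trace2 s : is_sign s -> ~ Rabs (s * 2) > 2.
Proof. intros [-> | ->]; [rewrite Rmult_1_l, Rabs_right | rewrite Rabs_left]; lra. Qed.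

(* The extended real line: [None] is the point at infinity. *)
Definition point := option R.

Definition hom (x : point) : R * R :=
  match x with Some y => (y, 1) | None => (1, 0) end.
Definition dehom (w : R * R) : point :=
  if Req_EM_T (snd w) 0 then None else Some (fst w / snd w).
Definition mvec (M : mat2) (w : R * R) : R * R :=
  (ma M * fst w + mb M * snd w, mc M * fst w + md M * snd w).
Definition mact (M : mat2) (x : point) : point := dehom (mvec M (hom x)).

Definition hom_nonzero (w : R * R) : Prop := fst w <> 0 \/ snd w <> 0.

Lemma hom_dehom w : hom_nonzero w ->
  exists k, k <> 0 /\ hom (dehom w) = (k * fst w, k * snd w).
Proof.
  destruct w as [u v]; unfold hom_nonzero, dehom; simpl; intros H.
  destruct (Req_EM_T v 0) as [->|Hv].
  - exists (/ u). destruct H; [|lra].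
    split; [apply Rinv_neq_0_compat; auto | simpl; f_equal; field; auto].
  - exists (/ v). split; [apply Rinv_neq_0_compat; auto | simpl; f_equal; field; auto].
Qed.

Lemma dehom_scale k w : k <> 0 -> dehom (k * fst w, k * snd w) = dehom w.
Proof.
  destruct w as [u v]; unfold dehom; simpl; intros Hk.
  destruct (Req_EM_T (k * v) 0) as [E|E], (Req_EM_T v 0) as [E'|E']; auto.
  - apply Rmult_integral in E. tauto.
  - subst. rewrite Rmult_0_r in E. tauto.
  - f_equal. field. auto.
Qed.

Lemma mvec_scale M k w :
  mvec M (k * fst w, k * snd w) = (k * fst (mvec M w), k * snd (mvec M w)).
Proof. destruct w; unfold mvec; simpl; f_equal; ring. Qed.

Lemma mvec_mmul A B w : mvec (mmul A B) w = mvec A (mvec B w).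
Proof. destruct w, A, B; unfold mvec, mmul; simpl; f_equal; ring. Qed.

Lemma mvec_nonzero M w : mdet M <> 0 -> hom_nonzero w -> hom_nonzero (mvec M w).
Proof.
  destruct w as [u v], M as [a b c d]; unfold hom_nonzero, mvec, mdet; simpl. intros Hd H.
  destruct (Req_EM_T (a * u + b * v) 0) as [E1|E1]; [|left; auto].
  destruct (Req_EM_T (c * u + d * v) 0) as [E2|E2]; [|right; auto].
  exfalso. destruct H as [H|H]; apply H, (Rmult_eq_reg_l (a * d - b * c)); auto;
    rewrite Rmult_0_r.
  - replace ((a * d - b * c) * u) with (d * (a * u + b * v) - b * (c * u + d * v)) by ring.
    rewrite E1, E2; ring.
  - replace ((a * d - b * c) * v) with (a * (c * u + d * v) - c * (a * u + b * v)) by ring.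
    rewrite E1, E2; ring.
Qed.

Lemma mact_mmul A B x : mdet B <> 0 -> mact (mmul A B) x = mact A (mact B x).
Proof.
  intros HB. unfold mact at 1 2 3.
  destruct (hom_dehom (mvec B (hom x))) as [k [Hk Hv]].
  { apply mvec_nonzero; auto. destruct x; unfold hom_nonzero; simpl; lra. }
  rewrite Hv, mvec_scale, dehom_scale, mvec_mmul; auto.
Qed.

Lemma mact_mscale k M x : k <> 0 -> mact (mscale k M) x = mact M x.
Proof.
  intros Hk. unfold mact. rewrite <- (dehom_scale k (mvec M (hom x))) by auto.
  f_equal. destruct x, M; unfold mvec, mscale; simpl; f_equal; ring.
Qed.

Lemma mact_mid x : mact mid x = x.
Proof.
  destruct x; unfold mact, dehom, mvec, hom, mid; simpl.
  - destruct (Req_EM_T (0 * r + 1 * 1) 0); [lra | f_equal; field].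
  - destruct (Req_EM_T (0 * 1 + 1 * 0) 0); [auto | lra].
Qed.

Lemma mact_Some M x : mact M (Some x) =
  if Req_EM_T (mc M * x + md M) 0 then None
  else Some ((ma M * x + mb M) / (mc M * x + md M)).
Proof. unfold mact, dehom, mvec, hom; simpl. rewrite !Rmult_1_r. reflexivity. Qed.

Lemma mact_Some_eq M x y : mc M * x + md M <> 0 ->
  y = (ma M * x + mb M) / (mc M * x + md M) -> mact M (Some x) = Some y.
Proof. intros H1 ->. rewrite mact_Some. destruct (Req_EM_T _ 0); [contradiction | auto]. Qed.

Lemma maps_to_mact M x y : maps_to M x y <-> mact M (Some x) = Some y.
Proof.
  rewrite mact_Some. split.
  - intros [H1 H2]. destruct (Req_EM_T _ 0); [contradiction | subst; auto].
  - destruct (Req_EM_T _ 0); [discriminate | intros H; injection H; split; auto].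
Qed.

Lemma mact_inj M x y z : mdet M <> 0 ->
  mact M (Some x) = Some z -> mact M (Some y) = Some z -> x = y.
Proof.
  intros Hd H1 H2. apply maps_to_mact in H1, H2.
  destruct H1 as [a1 b1], H2 as [a2 b2]. rewrite b1 in b2.
  destruct M as [a b c d]; unfold mdet in Hd; simpl in *.
  apply (Rmult_eq_reg_l (a * d - b * c)); auto.
  assert ((a * x + b) * (c * y + d) = (a * y + b) * (c * x + d))
    by (field_simplify_eq in b2; auto; lra).
  nra.
Qed.

Lemma affine_sign_constant (c d L : R) : 0 < L ->
  (forall z, 0 <= z <= L -> c * z + d <> 0) ->
  forall z1 z2, 0 <= z1 <= L -> 0 <= z2 <= L -> 0 < (c * z1 + d) * (c * z2 + d).
Proof.
  intros HL Hnz z1 z2 H1 H2.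
  destruct (Rlt_le_dec 0 ((c * z1 + d) * (c * z2 + d))) as [Hp|Hn]; auto. exfalso.
  pose proof (Hnz z1 H1) as A. pose proof (Hnz z2 H2) as B.
  set (A0 := c * z1 + d) in *. set (B0 := c * z2 + d) in *.
  assert (HAB : A0 * B0 < 0)
    by (destruct Hn as [Hn|Hn]; auto; apply Rmult_integral in Hn; tauto).
  set (t := B0 / (B0 - A0)).
  assert (HD : 0 < (B0 - A0) * (B0 - A0)) by nra.
  assert (Ht : 0 < t < 1).
  { unfold t. replace (B0 / (B0 - A0)) with (B0 * (B0 - A0) / ((B0 - A0) * (B0 - A0)))
      by (field; nra).
    split; [apply Rdiv_lt_0_compat; nra|].
    apply (Rmult_lt_reg_r ((B0 - A0) * (B0 - A0))); auto.
    unfold Rdiv. rewrite Rmult_assoc, Rinv_l by lra. nra. }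
  apply (Hnz (t * z1 + (1 - t) * z2)); [split; nra|].
  replace (c * (t * z1 + (1 - t) * z2) + d) with (t * A0 + (1 - t) * B0)
    by (unfold A0, B0; ring).
  unfold t. field. nra.
Qed.

Lemma mobius_fixed_point (a b c d L : R) : 0 < L ->
  (forall z, 0 <= z <= L -> c * z + d <> 0 /\ 0 <= (a * z + b) / (c * z + d) <= L) ->
  (a * L + b) / (c * L + d) < L ->
  exists w, 0 <= w < L /\ (a * w + b) / (c * w + d) = w.
Proof.
  intros HL Hmap HfL.
  assert (Hsign := affine_sign_constant c d L HL (fun z Hz => proj1 (Hmap z Hz))).
  (* [G] has the sign of [f z - z] on [[0, L]] and is continuous everywhere. *)
  set (G := fun z => (c * 0 + d) * ((a * z + b) - z * (c * z + d))).
  assert (HG : forall z, 0 <= z <= L ->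
    G z = ((c * 0 + d) * (c * z + d)) * ((a * z + b) / (c * z + d) - z)).
  { intros z Hz. unfold G. field. apply Hmap; auto. }
  assert (HGL : G L < 0).
  { rewrite HG by lra. pose proof (Hsign 0 L ltac:(lra) ltac:(lra)). nra. }
  assert (HG0 : 0 <= G 0).
  { rewrite HG by lra. destruct (Hmap 0 ltac:(lra)) as [_ [H0 _]].
    pose proof (Hsign 0 0 ltac:(lra) ltac:(lra)). apply Rmult_le_pos; lra. }
  enough (HGw : exists w, 0 <= w < L /\ G w = 0).
  { destruct HGw as [w [Hw HGw]]. exists w. split; auto.
    rewrite HG in HGw by lra. apply Rmult_integral in HGw.
    pose proof (Hsign 0 w ltac:(lra) ltac:(lra)). destruct HGw; lra. }
  destruct HG0 as [HG0|HG0]; [|exists 0; split; [lra | auto]].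
  destruct (IVT (fun z => - G z) 0 L) as [w [Hw HGw]]; [unfold G; reg | lra | lra | lra |].
  exists w. assert (w <> L) by (intros ->; lra). split; lra.
Qed.

Lemma orbit_contracting_absurd (X : nat -> R) w L mu : w < L -> 1 < mu ->
  (forall n, L <= X n) -> (forall n, X (S n) - w <= (X n - w) / mu) -> False.
Proof.
  intros HwL Hmu HX Hstep.
  assert (Hdecay : forall n, X n - w <= (X 0%nat - w) * (/ mu) ^ n).
  { induction n as [|n IH]; simpl; [lra|].
    apply Rle_trans with ((X n - w) / mu); [apply Hstep|].
    unfold Rdiv. rewrite (Rmult_comm (/ mu)), <- Rmult_assoc.
    apply Rmult_le_compat_r; [left; apply Rinv_0_lt_compat|]; lra. }
  assert (HX0 : 0 < X 0%nat - w) by (specialize (HX 0%nat); lra).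
  destruct (pow_lt_1_zero (/ mu)) with (y := (L - w) / (X 0%nat - w)) as [N HN].
  { rewrite Rabs_right by (left; apply Rinv_0_lt_compat; lra).
    rewrite <- Rinv_1. apply Rinv_lt_contravar; lra. }
  { apply Rdiv_lt_0_compat; lra. }
  specialize (HN N (Nat.le_refl N)). rewrite Rabs_right in HN
    by (left; apply pow_lt, Rinv_0_lt_compat; lra).
  apply (Rmult_lt_compat_l (X 0%nat - w)) in HN; auto.
  replace ((X 0%nat - w) * ((L - w) / (X 0%nat - w))) with (L - w) in HN by (field; lra).
  specialize (Hdecay N). specialize (HX N). lra.
Qed.

Lemma orbit_expanding_absurd (X : nat -> R) w U nu : 1 < nu -> w < X 0%nat ->
  (forall n, X n < U) -> (forall n, nu * (X n - w) <= X (S n) - w) -> False.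
Proof.
  intros Hnu Hw0 HX Hstep.
  assert (Hgrow : forall n, (X 0%nat - w) * nu ^ n <= X n - w).
  { induction n as [|n IH]; simpl; [lra|].
    apply Rle_trans with (nu * (X n - w)); [|apply Hstep].
    replace ((X 0%nat - w) * (nu * nu ^ n)) with (nu * ((X 0%nat - w) * nu ^ n)) by ring.
    apply Rmult_le_compat_l; lra. }
  destruct (Pow_x_infinity nu) with (b := (U - w) / (X 0%nat - w)) as [N HN].
  { rewrite Rabs_right; lra. }
  specialize (HN N (Nat.le_refl N)). rewrite Rabs_right in HN by (left; apply pow_lt; lra).
  apply Rge_le, (Rmult_le_compat_l (X 0%nat - w)) in HN; [|lra].
  replace ((X 0%nat - w) * ((U - w) / (X 0%nat - w))) with (U - w) in HN by (field; lra).
  specialize (Hgrow N). specialize (HX N). lra.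
Qed.

(* An orbit of [x |-> w + (x - w) / q(x)] with [q] affine, [q > 0] along the orbit and
   [q(L) > 1], staying in [[L, U)] above [w], cannot move: it would be pushed down to [w]
   or up past [U]. *)
Lemma affine_ratio_orbit_stationary (X : nat -> R) (w L U q0 s : R) : w < L -> 1 < q0 ->
  (forall n, L <= X n < U) -> (forall n, 0 < q0 + s * (X n - L)) ->
  (forall n, X (S n) - w = (X n - w) / (q0 + s * (X n - L))) -> X 1%nat = X 0%nat.
Proof.
  intros HwL Hq0 HX Hpos Hrec.
  assert (Hxw : forall n, 0 < X n - w) by (intro n; destruct (HX n); lra).
  assert (Hle : forall n q, 0 < q -> q <= q0 + s * (X n - L) -> X (S n) - w <= (X n - w) / q).
  { intros n q Hq Hqn. rewrite Hrec. apply Rmult_le_compat_l; [left; apply Hxw|].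
    apply Rinv_le_contravar; auto. }
  assert (Hge : forall n q, q0 + s * (X n - L) <= q -> (X n - w) / q <= X (S n) - w).
  { intros n q Hqn. rewrite Hrec. apply Rmult_le_compat_l; [left; apply Hxw|].
    apply Rinv_le_contravar; auto. }
  destruct (Rle_lt_dec 0 s) as [Hs|Hs].
  { exfalso. apply (orbit_contracting_absurd X w L q0); auto; [apply HX|].
    intro n. apply Hle; [lra|]. destruct (HX n). nra. }
  set (f0 := q0 + s * (X 0%nat - L)).
  assert (Hf0 : 0 < f0) by apply Hpos.
  destruct (Rtotal_order f0 1) as [H1|[H1|H1]]; [exfalso | | exfalso].
  - assert (Hmono : forall n, X 0%nat <= X n /\ X (S n) - w >= (X n - w) / f0).
    { induction n as [|n [I1 I2]]; [split; [lra | apply Rle_ge, Hge, Rle_refl]|].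
      assert (X n - w <= (X n - w) / f0).
      { unfold Rdiv. rewrite <- (Rmult_1_r (X n - w)) at 1. apply Rmult_le_compat_l.
        - left; apply Hxw.
        - rewrite <- Rinv_1. apply Rinv_le_contravar; lra. }
      split; [lra|]. apply Rle_ge, Hge. unfold f0. nra. }
    apply (orbit_expanding_absurd X w U (/ f0)); [rewrite <- Rinv_1; apply Rinv_lt_contravar; lra
      | specialize (Hxw 0%nat); lra | apply HX |].
    intro n. destruct (Hmono n) as [_ Hn]. unfold Rdiv in Hn. lra.
  - specialize (Hrec 0%nat). fold f0 in Hrec. rewrite H1, Rdiv_1_r in Hrec. lra.
  - assert (Hmono : forall n, X n <= X 0%nat /\ X (S n) - w <= (X n - w) / f0).
    { induction n as [|n [I1 I2]]; [split; [lra | apply Hle; [lra | apply Rle_refl]]|].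
      assert ((X n - w) / f0 <= X n - w).
      { unfold Rdiv. rewrite <- (Rmult_1_r (X n - w)) at 2. apply Rmult_le_compat_l.
        - left; apply Hxw.
        - rewrite <- Rinv_1. apply Rinv_le_contravar; lra. }
      split; [lra|]. apply Hle; [lra|]. unfold f0. nra. }
    apply (orbit_contracting_absurd X w L f0); auto; [apply HX|].
    intro n. apply Hmono.
Qed.

(* [w] is attracting from above: [f z - w = (z - w) / ((c z + d)(c w + d))], and the factor
   exceeds [1] at [L] since [f L < L]. *)
Lemma mobius_orbit_stationary (a b c d L U w : R) (X : nat -> R) :
  a * d - b * c = 1 -> 0 <= w < L ->
  (forall z, 0 <= z <= L -> c * z + d <> 0) ->
  (a * w + b) / (c * w + d) = w -> (a * L + b) / (c * L + d) < L ->
  (forall n, L <= X n < U) ->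
  (forall n, c * X n + d <> 0 /\ X (S n) = (a * X n + b) / (c * X n + d)) ->
  X 1%nat = X 0%nat.
Proof.
  intros Hdet Hw Hnz Hfix HfL HX Horb.
  assert (Hw0 : c * w + d <> 0) by (apply Hnz; lra).
  assert (Hdiff : forall z, c * z + d <> 0 ->
    (a * z + b) / (c * z + d) - w = (z - w) / ((c * z + d) * (c * w + d))).
  { intros z Hz. rewrite <- Hfix at 1. rewrite <- (Rmult_1_l (z - w)), <- Hdet.
    field. auto. }
  set (q0 := (c * L + d) * (c * w + d)).
  assert (Hq : forall z, (c * z + d) * (c * w + d) = q0 + c * (c * w + d) * (z - L))
    by (intro; unfold q0; ring).
  assert (HLpos : 0 < q0) by (apply (affine_sign_constant c d L); auto; lra).
  assert (Hq0 : 1 < q0).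
  { pose proof (Hdiff L (Hnz L ltac:(lra))) as H. fold q0 in H.
    assert (Hlt : (L - w) / q0 < L - w) by lra.
    apply (Rmult_lt_compat_r q0) in Hlt; auto.
    unfold Rdiv in Hlt. rewrite Rmult_assoc, Rinv_l in Hlt by lra. nra. }
  assert (Hrec : forall n, X (S n) - w = (X n - w) / (q0 + c * (c * w + d) * (X n - L))).
  { intro n. destruct (Horb n) as [Hn ->]. rewrite Hdiff, Hq; auto. }
  apply (affine_ratio_orbit_stationary X w L U q0 (c * (c * w + d))); auto; [lra|].
  intro n. rewrite <- Hq.
  destruct (HX n), (HX (S n)), (Horb n) as [Hn _].
  pose proof (Hrec n) as Hr. rewrite <- Hq in Hr.
  destruct (Rlt_le_dec 0 ((c * X n + d) * (c * w + d))) as [Hpos|Hneg]; auto.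
  assert (Hneg' : (c * X n + d) * (c * w + d) < 0)
    by (destruct Hneg as [|Hneg]; auto; apply Rmult_integral in Hneg; tauto).
  assert ((X n - w) / ((c * X n + d) * (c * w + d)) < 0)
    by (unfold Rdiv; apply Rmult_pos_neg; [lra | apply Rinv_lt_0_compat; auto]).
  lra.
Qed.

Lemma mod_add_r_cancel a b k m : (a + k) mod m = (b + k) mod m -> a mod m = b mod m.
Proof.
  intros H. destruct m as [|m]; [simpl in *; lia|].
  rewrite <- (Nat.Div0.mod_add a k), <- (Nat.Div0.mod_add b k).
  replace (a + k * S m)%nat with (a + k + k * m)%nat by lia.
  replace (b + k * S m)%nat with (b + k + k * m)%nat by lia.
  rewrite <- Nat.Div0.add_mod_idemp_l, H, Nat.Div0.add_mod_idemp_l. reflexivity.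
Qed.

Lemma mod_succ_iff i c m : (c < m)%nat -> (i mod m = c <-> (i + 1) mod m = (c + 1) mod m)%nat.
Proof.
  intros Hc. split; intros H.
  - rewrite <- H, Nat.Div0.add_mod_idemp_l. reflexivity.
  - apply mod_add_r_cancel in H. rewrite (Nat.mod_small c m Hc) in H. exact H.
Qed.

Lemma mod_add_small_iff i c m : (c < m)%nat -> ((i + c) mod m = c <-> i mod m = 0)%nat.
Proof.
  intros Hc. split; intros H.
  - rewrite <- (Nat.mod_small c m), <- (Nat.add_0_l c) in H at 2 by auto.
    apply mod_add_r_cancel in H. rewrite H. apply Nat.Div0.mod_0_l.
  - rewrite <- Nat.Div0.add_mod_idemp_l, H. apply Nat.mod_small; auto.
Qed.

Lemma rotated_pattern_pred (u : nat -> Z) m c k : (c < m)%nat -> (1 <= k)%nat ->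
  (forall j, u (j + k)%nat = u j) ->
  (forall j, u (S j) = if Nat.eqb (j mod m) c then 2%Z else 1%Z) ->
  forall j, u j = if Nat.eqb (j mod m) ((c + 1) mod m) then 2%Z else 1%Z.
Proof.
  intros Hc Hk Hper Hu.
  assert (Hkm : (k mod m = 0)%nat).
  { pose proof (Hu (c + k)%nat) as H. replace (S (c + k)) with (S c + k)%nat in H by lia.
    rewrite Hper, Hu, Nat.mod_small, Nat.eqb_refl in H by auto.
    destruct (Nat.eqb_spec ((c + k) mod m) c) as [e|e]; [|discriminate].
    rewrite Nat.add_comm in e. apply mod_add_small_iff in e; auto. }
  intros [|j].
  - rewrite <- (Hper 0%nat). simpl. replace k with (S (k - 1)) by lia. rewrite Hu.
    rewrite Nat.Div0.mod_0_l.
    pose proof (mod_succ_iff (k - 1) c m Hc) as E1. replace (k - 1 + 1)%nat with k in E1 by lia.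
    rewrite Hkm in E1.
    destruct (Nat.eqb_spec ((k - 1) mod m) c), (Nat.eqb_spec 0 ((c + 1) mod m)); tauto.
  - rewrite Hu. pose proof (mod_succ_iff j c m Hc) as E1. replace (j + 1)%nat with (S j) in E1 by lia.
    destruct (Nat.eqb_spec (j mod m) c), (Nat.eqb_spec (S j mod m) ((c + 1) mod m)); tauto.
Qed.

Lemma periodic_agree {A : Type} (u v : nat -> A) k : (1 <= k)%nat -> (forall j, u (j + k)%nat = u j) ->
  (forall j, v (j + k)%nat = v j) -> (forall i, (i < k)%nat -> u i = v i) ->
  forall j, u j = v j.
Proof.
  intros Hk Hu Hv Hagree j. induction j as [j IH] using (well_founded_induction lt_wf).
  destruct (Nat.lt_ge_cases j k) as [Hj|Hj]; auto.
  replace j with ((j - k) + k)%nat by lia. rewrite Hu, Hv. apply IH. lia.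
Qed.

Section Digits.
Variable p : nat.
Hypothesis hp : (3 <= p)%nat.

Let lam_pos := lam_pos p hp.

Lemma rdigit_spec y : (IZR (rdigit p y) - 1) * lam p <= y < IZR (rdigit p y) * lam p.
Proof.
  unfold rdigit. rewrite plus_IZR. destruct (base_Int_part (y / lam p)) as [H1 H2].
  set (k := IZR (Int_part (y / lam p))) in *.
  assert (Hy : y = y / lam p * lam p) by (field; lra).
  split; rewrite Hy at 1; [apply Rmult_le_compat_r | apply Rmult_lt_compat_r]; lra.
Qed.

Lemma rdigit_unique y k : (IZR k - 1) * lam p <= y < IZR k * lam p -> rdigit p y = k.
Proof.
  intros [H1 H2]. unfold rdigit.
  replace (Int_part (y / lam p)) with (k - 1)%Z; [ring|].
  apply Int_part_spec. rewrite minus_IZR.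
  assert (Hy : y / lam p * lam p = y) by (field; lra).
  assert (y / lam p < IZR k) by (apply (Rmult_lt_reg_r (lam p)); lra).
  assert (IZR k - 1 <= y / lam p) by (apply (Rmult_le_reg_r (lam p)); lra).
  lra.
Qed.

Lemma rdigit_small z : 0 <= z < lam p -> rdigit p z = 1%Z.
Proof. intros. apply rdigit_unique. simpl. lra. Qed.

Lemma rdigit_lam : rdigit p (lam p) = 2%Z.
Proof. apply rdigit_unique. simpl. lra. Qed.

Lemma rdigit_ge2 y : lam p <= y -> (2 <= rdigit p y)%Z.
Proof.
  intros H. destruct (rdigit_spec y) as [_ Hy].
  assert (Hr : 1 < IZR (rdigit p y)) by nra. apply lt_IZR in Hr. lia.
Qed.

Lemma lam_le_of_rdigit_ge2 y : (2 <= rdigit p y)%Z -> lam p <= y.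
Proof. intros H. apply IZR_le in H. destruct (rdigit_spec y). simpl in H. nra. Qed.

Lemma rho_ge_inv_lam y : / lam p <= rho p y.
Proof.
  unfold rho. destruct (rdigit_spec y).
  unfold Rdiv. rewrite Rmult_1_l. apply Rinv_le_contravar; lra.
Qed.

Lemma rho_small z : 0 <= z < lam p -> rho p z = 1 / (lam p - z).
Proof. intros. unfold rho. rewrite rdigit_small by auto. f_equal. simpl. ring. Qed.

Lemma cf_digit_ge1 x j : (1 <= j)%nat -> (1 <= cf_digit p x j)%Z.
Proof.
  intros Hj. unfold cf_digit. replace j with (S (j - 1)) by lia. simpl.
  set (y := rho p (rho_iter p (j - 1) x)).
  assert (/ lam p <= y) by apply rho_ge_inv_lam.
  pose proof (Rinv_0_lt_compat _ lam_pos). destruct (rdigit_spec y).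
  assert (Hr : 0 < IZR (rdigit p y)) by nra. apply lt_IZR in Hr. lia.
Qed.

End Digits.

Section ContinuedFractionMatrices.
Variable p : nat.

Lemma rho_iter_add a b y : rho_iter p (a + b) y = rho_iter p a (rho_iter p b y).
Proof. induction a as [|a IH]; simpl; auto. rewrite IH; auto. Qed.

Lemma rho_iter_mul_period l y : rho_iter p l y = y -> forall t, rho_iter p (t * l) y = y.
Proof. intros H t. induction t as [|t IH]; simpl; auto. rewrite rho_iter_add, IH. auto. Qed.

Lemma cf_digit_add x j s : cf_digit p x (j + s) = cf_digit p (rho_iter p s x) j.
Proof. unfold cf_digit. rewrite rho_iter_add. auto. Qed.

Lemma cf_digit_rho x j : cf_digit p (rho p x) j = cf_digit p x (S j).
Proof. replace (S j) with (j + 1)%nat by lia. rewrite cf_digit_add. reflexivity. Qed.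

(* [Emat] is [T S^-1]. The step at [y] is [T S^(-r(y))], mapping [y] to [rho y]; at infinity
   it is [T], mapping infinity to [0]. *)
Definition Emat : mat2 := Mat2 0 (-1) 1 (- lam p).

Definition cf_step (x : point) : mat2 :=
  match x with
  | Some y => Mat2 0 (-1) 1 (- (IZR (rdigit p y) * lam p))
  | None => Tmat
  end.

Definition rhox (x : point) : point :=
  match x with Some y => Some (rho p y) | None => Some 0 end.

Fixpoint rhox_iter (n : nat) (x : point) : point :=
  match n with O => x | S k => rhox (rhox_iter k x) end.

Fixpoint cf_mat (n : nat) (x : point) : mat2 :=
  match n with O => mid | S k => mmul (cf_step (rhox_iter k x)) (cf_mat k x) end.

Lemma mdet_cf_step x : mdet (cf_step x) = 1.
Proof. destruct x; unfold mdet, Tmat; simpl; ring. Qed.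

Lemma mdet_cf_mat n x : mdet (cf_mat n x) = 1.
Proof.
  induction n as [|n IH]; simpl; [unfold mdet, mid; simpl; ring|].
  rewrite mdet_mmul, mdet_cf_step, IH; ring.
Qed.

Lemma mdet_cf_mat_neq0 n x : mdet (cf_mat n x) <> 0.
Proof. rewrite mdet_cf_mat. lra. Qed.

Lemma rhox_iter_add a b x : rhox_iter (a + b) x = rhox_iter a (rhox_iter b x).
Proof. induction a as [|a IH]; simpl; auto. rewrite IH; auto. Qed.

Lemma rhox_iter_Some n y : rhox_iter n (Some y) = Some (rho_iter p n y).
Proof. induction n as [|n IH]; simpl; auto. rewrite IH; auto. Qed.

Lemma cf_mat_add a b x : cf_mat (a + b) x = mmul (cf_mat a (rhox_iter b x)) (cf_mat b x).
Proof.
  induction a as [|a IH]; simpl; [rewrite mmul_1l; auto|].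
  rewrite IH, rhox_iter_add, mmul_assoc. auto.
Qed.

Lemma cf_mat_Sr n x : cf_mat (S n) x = mmul (cf_mat n (rhox x)) (cf_step x).
Proof. replace (S n) with (n + 1)%nat by lia. rewrite cf_mat_add. simpl. rewrite mmul_1r. auto. Qed.

Lemma cf_mat_digits n x y :
  (forall j, (j < n)%nat -> cf_digit p x j = cf_digit p y j) ->
  cf_mat n (Some x) = cf_mat n (Some y).
Proof.
  induction n as [|n IH]; intros H; simpl; auto.
  rewrite IH by (intros; apply H; lia). rewrite !rhox_iter_Some. simpl.
  specialize (H n ltac:(lia)). unfold cf_digit in H. rewrite H. auto.
Qed.

End ContinuedFractionMatrices.

Section Steps.
Variable p : nat.
Hypothesis hp : (3 <= p)%nat.

Lemma mact_cf_step x : mact (cf_step p x) x = rhox p x.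
Proof.
  destruct x as [y|]; simpl.
  - destruct (rdigit_spec p hp y). apply mact_Some_eq; simpl; [lra | unfold rho; field; lra].
  - unfold mact, dehom, mvec, hom, Tmat; simpl.
    destruct (Req_EM_T _ 0); [lra | f_equal; field].
Qed.

Lemma mact_cf_mat n x : mact (cf_mat p n x) x = rhox_iter p n x.
Proof.
  induction n as [|n IH]; simpl; [apply mact_mid|].
  rewrite mact_mmul, IH by apply mdet_cf_mat_neq0. apply mact_cf_step.
Qed.

Lemma cf_step_small z : 0 <= z < lam p -> cf_step p (Some z) = Emat p.
Proof. intros. simpl. rewrite (rdigit_small p hp) by auto. unfold Emat. f_equal. simpl; ring. Qed.

Lemma cf_mat_small_orbit k x : (forall i, (i < k)%nat -> 0 <= rho_iter p i x < lam p) ->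
  cf_mat p k (Some x) = mpow (Emat p) k.
Proof.
  induction k as [|k IH]; intros H; simpl; auto.
  rewrite IH, rhox_iter_Some, cf_step_small by (intros; apply H; lia). auto.
Qed.

End Steps.

Section TailLink.
Variable p : nat.
Hypothesis hp : (3 <= p)%nat.

(* [V] is a tail link at [x] when the rho-orbits of [x] and [V x] merge and [V] is,
   up to sign, the quotient of the continued-fraction matrices along the two orbits. *)
Definition tail_link (V : mat2) (x : point) : Prop :=
  exists m n s, is_sign s /\ mmul (cf_mat p m (mact V x)) V = mscale s (cf_mat p n x).

Lemma tail_link_orbits V x m n s : mdet V <> 0 -> is_sign s ->
  mmul (cf_mat p m (mact V x)) V = mscale s (cf_mat p n x) ->
  rhox_iter p m (mact V x) = rhox_iter p n x.
Proof.
  intros HV Hs H.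
  rewrite <- (mact_cf_mat p hp m (mact V x)), <- mact_mmul, H by auto.
  rewrite mact_mscale by (apply is_sign_neq0; auto). apply mact_cf_mat; auto.
Qed.

Lemma tail_link_mmul A B x : mdet A <> 0 -> mdet B <> 0 ->
  tail_link B x -> tail_link A (mact B x) -> tail_link (mmul A B) x.
Proof.
  intros HA HB [m1 [n1 [s1 [Hs1 H1]]]] [m2 [n2 [s2 [Hs2 H2]]]].
  pose proof (tail_link_orbits _ _ _ _ _ HB Hs1 H1) as I1.
  pose proof (tail_link_orbits _ _ _ _ _ HA Hs2 H2) as I2.
  exists (m1 + m2)%nat, (n2 + n1)%nat, (s1 * s2). split; [apply is_sign_mul; auto|].
  rewrite mact_mmul by auto.
  rewrite cf_mat_add, <- mmul_assoc, mmul_assoc with (A := cf_mat p m2 _), H2, I2.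
  rewrite mmul_scale_l, mmul_scale_r, mmul_assoc, <- cf_mat_add.
  replace (m1 + n2)%nat with (n2 + m1)%nat by lia.
  rewrite cf_mat_add, <- mmul_assoc, H1, I1, mmul_scale_r, <- cf_mat_add.
  rewrite mscale_mscale. f_equal. ring.
Qed.

Lemma tail_link_inv A A' s x : is_sign s -> mdet A <> 0 ->
  mmul A' A = mscale s mid -> mmul A A' = mscale s mid ->
  tail_link A x -> tail_link A' (mact A x).
Proof.
  intros Hs HA H1 H2 [m [n [t [Ht H]]]].
  exists n, m, (t * s). split; [apply is_sign_mul; auto|].
  rewrite <- mact_mmul, H1, mact_mscale, mact_mid by (auto; apply is_sign_neq0; auto).
  assert (HA' : mscale t (mmul (cf_mat p n x) A') = mscale s (cf_mat p m (mact A x))).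
  { now rewrite <- mmul_scale_l, <- H, <- mmul_assoc, H2, mmul_scale_r, mmul_1r. }
  rewrite <- (mscale_1 (mmul _ A')), <- (is_sign_sqr t), <- mscale_mscale, HA' by auto.
  now rewrite mscale_mscale.
Qed.

Lemma tail_link_mscale V x k : is_sign k -> tail_link V x -> tail_link (mscale k V) x.
Proof.
  intros Hk [m [n [s [Hs H]]]]. exists m, n, (k * s). split; [apply is_sign_mul; auto|].
  rewrite mact_mscale by (apply is_sign_neq0; auto).
  rewrite mmul_scale_r, H, mscale_mscale. auto.
Qed.

Lemma tail_link_mid x : tail_link mid x.
Proof.
  exists 0%nat, 0%nat, 1. split; [left; auto|].
  rewrite mact_mid. simpl. rewrite mmul_1l, mscale_1. auto.
Qed.

Lemma tail_link_cf_step x : tail_link (cf_step p x) x.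
Proof.
  exists 0%nat, 1%nat, 1. split; [left; auto|].
  simpl. rewrite mmul_1l, mmul_1r, mscale_1. auto.
Qed.

Lemma tail_link_mpow A n y : mdet A = 1 ->
  (forall i, (i < n)%nat -> tail_link A (mact (mpow A i) y)) -> tail_link (mpow A n) y.
Proof.
  intros HA H. induction n as [|n IH]; simpl; [apply tail_link_mid|].
  apply tail_link_mmul; auto; [rewrite HA | rewrite mdet_mpow]; auto; lra.
Qed.

End TailLink.

Section LamOrbit.
Variable p : nat.
Hypothesis hp : (3 <= p)%nat.

Let lam_pos := lam_pos p hp.
Local Notation E := (Emat p).
Local Notation c := (cheb (lam p)).

Lemma Emat_pow n : mpow E (S n) =
  mscale ((-1) ^ (S n)) (Mat2 (- c n) (c (S n)) (- c (S n)) (c (S (S n)))).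
Proof.
  induction n as [|n IH].
  - simpl. unfold Emat, mscale, mmul, mid; simpl. f_equal; ring.
  - rewrite mpow_Sr, IH, !cheb_SS. unfold Emat, mscale, mmul; simpl. f_equal; ring.
Qed.

Lemma Emat_pow_p : mpow E p = mscale ((-1) ^ (S p)) mid.
Proof.
  assert (Hc : c (S (S (p - 1))) = -1).
  { rewrite cheb_SS. replace (S (p - 1)) with p by lia.
    rewrite cheb_lam_p, cheb_lam_pred by auto. ring. }
  assert (Hp : mpow E p = mpow E (S (p - 1))) by (f_equal; lia).
  rewrite Hp, Emat_pow, Hc. replace (S (p - 1)) with p by lia.
  rewrite cheb_lam_p, cheb_lam_pred by auto.
  unfold mscale, mid; simpl. f_equal; ring.
Qed.

Lemma Emat_pow_pred2 :
  mpow E (p - 2) = mscale ((-1) ^ (p - 1)) (Mat2 (lam p * lam p - 1) (- lam p) (lam p) (-1)).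
Proof.
  replace (p - 2)%nat with (S (p - 3)) at 1 by lia. rewrite Emat_pow.
  replace (S (p - 3)) with (p - 2)%nat by lia. replace (S (p - 2)) with (p - 1)%nat by lia.
  rewrite cheb_lam_pred3, cheb_lam_pred2, cheb_lam_pred by auto.
  replace (p - 1)%nat with (S (p - 2)) by lia. unfold mscale; simpl. f_equal; ring.
Qed.

(* For [1 <= j <= p - 1], [zero_orbit j] is the [(j-1)]-th point of the rho-orbit
   [0 -> 1/lam -> ... -> lam] of [0]. *)
Definition zero_orbit (j : nat) : R := c (j - 1) / c j.

Lemma zero_orbit_1 : zero_orbit 1 = 0.
Proof. unfold zero_orbit; simpl. field. Qed.

Lemma zero_orbit_2 : zero_orbit 2 = 1 / lam p.
Proof. unfold zero_orbit; simpl. field. lra. Qed.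

Lemma zero_orbit_pred : zero_orbit (p - 1) = lam p.
Proof.
  unfold zero_orbit. replace (p - 1 - 1)%nat with (p - 2)%nat by lia.
  rewrite cheb_lam_pred2, cheb_lam_pred by auto. field.
Qed.

Lemma zero_orbit_rec j : (1 <= j <= p - 2)%nat ->
  0 < lam p - zero_orbit j /\ zero_orbit (S j) = 1 / (lam p - zero_orbit j).
Proof.
  intros Hj. unfold zero_orbit.
  assert (Hc1 := cheb_lam_pos p hp j ltac:(lia)).
  assert (Hc2 := cheb_lam_pos p hp (S j) ltac:(lia)).
  replace (S j - 1)%nat with j by lia.
  assert (Hr : c (S j) = lam p * c j - c (j - 1))
    by (replace (S j) with (S (S (j - 1))) by lia; rewrite cheb_SS; do 3 f_equal; lia).
  replace (lam p - c (j - 1) / c j) with (c (S j) / c j) by (rewrite Hr; field; lra).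
  split; [apply Rdiv_lt_0_compat; auto | field; lra].
Qed.

Lemma zero_orbit_lt_S j : (1 <= j <= p - 2)%nat -> zero_orbit j < zero_orbit (S j).
Proof.
  intros Hj. unfold zero_orbit.
  assert (Hc1 := cheb_lam_pos p hp j ltac:(lia)).
  assert (Hc2 := cheb_lam_pos p hp (S j) ltac:(lia)).
  replace (S j - 1)%nat with j by lia.
  pose proof (cheb_cassini (lam p) (j - 1)) as H. replace (S (j - 1)) with j in H by lia.
  apply (Rmult_lt_reg_r (c j * c (S j))); [nra|].
  replace (c (j - 1) / c j * (c j * c (S j))) with (c (j - 1) * c (S j)) by (field; lra).
  replace (c j / c (S j) * (c j * c (S j))) with (c j * c j) by (field; lra).
  lra.
Qed.

Lemma zero_orbit_le i j : (1 <= i)%nat -> (i <= j)%nat -> (j <= p - 1)%nat ->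
  zero_orbit i <= zero_orbit j.
Proof.
  intros Hi Hij Hj. induction Hij as [|j Hij IH]; [lra|].
  apply Rle_trans with (zero_orbit j); [apply IH; lia | left; apply zero_orbit_lt_S; lia].
Qed.

Lemma zero_orbit_nonneg j : (1 <= j <= p - 1)%nat -> 0 <= zero_orbit j.
Proof. intros. rewrite <- zero_orbit_1. apply zero_orbit_le; lia. Qed.

Lemma zero_orbit_le_lam j : (1 <= j <= p - 1)%nat -> zero_orbit j <= lam p.
Proof. intros. rewrite <- zero_orbit_pred. apply zero_orbit_le; lia. Qed.

Lemma zero_orbit_lt_lam j : (1 <= j <= p - 2)%nat -> zero_orbit j < lam p.
Proof.
  intros. apply Rlt_le_trans with (zero_orbit (S j)); [apply zero_orbit_lt_S; lia|].
  apply zero_orbit_le_lam; lia.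
Qed.

Lemma zero_orbit_small j : (1 <= j <= p - 2)%nat -> 0 <= zero_orbit j < lam p.
Proof. intros. split; [apply zero_orbit_nonneg | apply zero_orbit_lt_lam]; lia. Qed.

Lemma rho_lam : rho p (lam p) = rho p 0.
Proof.
  unfold rho. rewrite rdigit_lam, rdigit_small by (auto; lra). f_equal. simpl. ring.
Qed.

Lemma rho_zero_orbit j : (1 <= j <= p - 2)%nat -> rho p (zero_orbit j) = zero_orbit (S j).
Proof.
  intros Hj. rewrite rho_small by (auto; apply zero_orbit_small; lia).
  symmetry. apply zero_orbit_rec; auto.
Qed.

Lemma rho_iter_zero k : (k <= p - 2)%nat -> rho_iter p k 0 = zero_orbit (S k).
Proof.
  induction k as [|k IH]; intros Hk; [symmetry; apply zero_orbit_1|].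
  simpl. rewrite IH, rho_zero_orbit by lia. auto.
Qed.

Lemma cf_mat_zero k : (k <= p - 2)%nat -> cf_mat p k (Some 0) = mpow E k.
Proof.
  intros Hk. apply cf_mat_small_orbit; auto. intros i Hi.
  rewrite rho_iter_zero by lia. apply zero_orbit_small; lia.
Qed.

Lemma rho_iter_lam_small i : (i <= p - 3)%nat -> rho_iter p (S i) (lam p) = zero_orbit (S (S i)).
Proof.
  intros Hi. replace (S i) with (i + 1)%nat by lia. rewrite rho_iter_add. simpl.
  rewrite rho_lam. change (rho_iter p i (rho p 0)) with (rho_iter p i (rho_iter p 1 0)).
  now rewrite <- rho_iter_add, rho_iter_zero by lia.
Qed.

Lemma rho_iter_lam_cycle : rho_iter p (p - 2) (lam p) = lam p.
Proof.
  replace (p - 2)%nat with (S (p - 3)) by lia. rewrite rho_iter_lam_small by lia.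
  replace (S (S (p - 3))) with (p - 1)%nat by lia. apply zero_orbit_pred.
Qed.

Lemma rho_iter_lam_mod n : rho_iter p n (lam p) = rho_iter p (n mod (p - 2)) (lam p).
Proof.
  rewrite (Nat.div_mod_eq n (p - 2)) at 1. rewrite Nat.add_comm, rho_iter_add, Nat.mul_comm.
  rewrite rho_iter_mul_period; auto. apply rho_iter_lam_cycle.
Qed.

Lemma rho_iter_lam_range n : 0 <= rho_iter p n (lam p) <= lam p /\
  (rho_iter p n (lam p) = lam p <-> (n mod (p - 2) = 0)%nat).
Proof.
  rewrite rho_iter_lam_mod. assert (Hm := Nat.mod_upper_bound n (p - 2) ltac:(lia)).
  destruct (n mod (p - 2))%nat as [|i]; [simpl; split; [lra | tauto]|].
  rewrite rho_iter_lam_small by lia.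
  pose proof (zero_orbit_small (S (S i)) ltac:(lia)). split; [lra|]. split; [lra | discriminate].
Qed.

Lemma cf_digit_lam n : cf_digit p (lam p) n = (if Nat.eqb (n mod (p - 2)) 0 then 2 else 1)%Z.
Proof.
  unfold cf_digit. destruct (rho_iter_lam_range n) as [H1 H2].
  destruct (Nat.eqb_spec (n mod (p - 2)) 0) as [E0|E0].
  - rewrite (proj2 H2 E0). apply rdigit_lam; auto.
  - apply rdigit_small; auto. split; [lra|]. destruct H1 as [_ [H1|H1]]; [auto | tauto].
Qed.

(* Up to sign, the matrix of [q] turns around the rho-cycle of [lam]. *)
Definition lam_parabolic (q : R) : mat2 :=
  Mat2 (1 - q * lam p ^ 2) (q * lam p ^ 3) (- q * lam p) (1 + q * lam p ^ 2).

Lemma trace_lam_parabolic q : trace (lam_parabolic q) = 2.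
Proof. unfold trace, lam_parabolic; simpl; ring. Qed.

Lemma cf_mat_lam_cycle :
  exists s, is_sign s /\ cf_mat p (p - 2) (Some (lam p)) = mscale s (lam_parabolic 1).
Proof.
  exists (- (-1) ^ (p - 1)). split; [apply is_sign_opp, is_sign_pow|].
  replace (p - 2)%nat with (p - 3 + 1)%nat by lia. rewrite cf_mat_add. simpl rhox_iter.
  rewrite rho_lam, cf_mat_small_orbit; auto.
  2: { intros i Hi. change (rho_iter p i (rho p 0)) with (rho_iter p i (rho_iter p 1 0)).
       rewrite <- rho_iter_add, rho_iter_zero by lia. apply zero_orbit_small; lia. }
  simpl cf_mat. rewrite rdigit_lam, mmul_1r by auto.
  replace (Mat2 0 (-1) 1 (- (IZR 2 * lam p))) with (mmul E (Sinv p))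
    by (unfold mmul, Emat, Sinv; simpl; f_equal; ring).
  rewrite mmul_assoc, <- mpow_Sr. replace (S (p - 3)) with (p - 2)%nat by lia.
  rewrite Emat_pow_pred2. unfold mscale, mmul, lam_parabolic, Sinv; simpl; f_equal; ring.
Qed.

Lemma cf_mat_lam_cycles q : exists s, is_sign s /\
  cf_mat p (q * (p - 2)) (Some (lam p)) = mscale s (lam_parabolic (INR q)).
Proof.
  induction q as [|q [s [Hs H]]].
  - exists 1. split; [left; auto|]. simpl. unfold lam_parabolic, mscale, mid; simpl; f_equal; ring.
  - destruct cf_mat_lam_cycle as [s' [Hs' H']].
    exists (s' * s). split; [apply is_sign_mul; auto|].
    replace (S q * (p - 2))%nat with ((p - 2) + q * (p - 2))%nat by (simpl; lia).
    rewrite cf_mat_add, H, rhox_iter_Some, rho_iter_mul_period, H', S_INR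
      by apply rho_iter_lam_cycle.
    unfold lam_parabolic, mscale, mmul; simpl; f_equal; ring.
Qed.

Lemma lam_parabolic_fixed q s z : 0 < q -> is_sign s ->
  mact (mscale s (lam_parabolic q)) (Some z) = Some z -> z = lam p.
Proof.
  intros Hq Hs H. rewrite mact_mscale in H by (apply is_sign_neq0; auto).
  apply maps_to_mact in H. destruct H as [H1 H2]. unfold lam_parabolic in *; simpl in *.
  assert (Hz : z * (- q * lam p * z + (1 + q * lam p ^ 2)) = (1 - q * lam p ^ 2) * z + q * lam p ^ 3).
  { rewrite H2 at 1. field. intro Hc. apply H1. rewrite <- Hc. ring. }
  assert (Hsq : q * lam p * ((z - lam p) * (z - lam p)) = 0) by nra.
  apply Rmult_integral in Hsq. destruct Hsq as [Hsq | Hsq]; [nra|].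
  apply Rmult_integral in Hsq. lra.
Qed.

End LamOrbit.

Section Generators.
Variable p : nat.
Hypothesis hp : (3 <= p)%nat.

Let lam_pos := lam_pos p hp.
Local Notation E := (Emat p).
Local Notation link := (tail_link p).

Lemma mdet_Smat : mdet (Smat p) = 1. Proof. unfold mdet, Smat; simpl; ring. Qed.
Lemma mdet_Sinv : mdet (Sinv p) = 1. Proof. unfold mdet, Sinv; simpl; ring. Qed.
Lemma mdet_Tmat : mdet Tmat = 1. Proof. unfold mdet, Tmat; simpl; ring. Qed.
Lemma mdet_Tinv : mdet Tinv = 1. Proof. unfold mdet, Tinv; simpl; ring. Qed.
Lemma mdet_Emat : mdet E = 1. Proof. unfold mdet, Emat; simpl; ring. Qed.

Lemma mact_Smat y : mact (Smat p) (Some y) = Some (y + lam p).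
Proof. apply mact_Some_eq; simpl; [lra | field]. Qed.
Lemma mact_Sinv y : mact (Sinv p) (Some y) = Some (y - lam p).
Proof. apply mact_Some_eq; simpl; [lra | field]. Qed.
Lemma mact_Tmat y : y <> 0 -> mact Tmat (Some y) = Some (- 1 / y).
Proof. intros. apply mact_Some_eq; simpl; [lra | field; auto]. Qed.
Lemma mact_Emat u : u <> lam p -> mact E (Some u) = Some (1 / (lam p - u)).
Proof. intros. apply mact_Some_eq; simpl; [lra | field; lra]. Qed.

Lemma Tmat_sqr : mmul Tmat Tmat = mscale (-1) mid.
Proof. unfold mscale, mmul, Tmat, mid; simpl; f_equal; ring. Qed.

Lemma tail_link_Smat_finite y : link (Smat p) (Some y).
Proof.
  exists 1%nat, 1%nat, 1. split; [left; auto|]. rewrite mact_Smat. simpl.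
  rewrite mscale_1, !mmul_1r.
  assert (Hr : rdigit p (y + lam p) = (rdigit p y + 1)%Z).
  { apply rdigit_unique; auto. pose proof (rdigit_spec p hp y). rewrite plus_IZR. simpl. lra. }
  rewrite Hr, plus_IZR. unfold mmul, Smat; simpl. f_equal; ring.
Qed.

(* The orbit of infinity is [oo -> 0 -> 1/lam -> ... -> lam], so [p] steps reach [lam]'s cycle. *)
Lemma cf_mat_inf : cf_mat p p None = mmul (mmul (mmul E (Sinv p)) (mpow E (p - 2))) Tmat.
Proof.
  replace (cf_mat p p None) with (cf_mat p (S (1 + (p - 2))) None) by (f_equal; lia).
  rewrite cf_mat_Sr, cf_mat_add. simpl rhox.
  rewrite rhox_iter_Some, rho_iter_zero, cf_mat_zero by (auto; lia).
  replace (S (p - 2)) with (p - 1)%nat by lia. rewrite zero_orbit_pred by auto.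
  simpl. rewrite (rdigit_lam p hp), mmul_1r.
  unfold mmul, Emat, Sinv; simpl; f_equal; f_equal; f_equal; ring.
Qed.

Lemma tail_link_Smat_inf : link (Smat p) None.
Proof.
  assert (Hinf : mact (Smat p) None = None).
  { unfold mact, dehom, mvec, hom, Smat; simpl. destruct (Req_EM_T _ 0); [auto | lra]. }
  exists 2%nat, p, (- (-1) ^ (p - 1)). split; [apply is_sign_opp, is_sign_pow|].
  rewrite Hinf, cf_mat_inf, Emat_pow_pred2 by auto. simpl.
  rewrite rdigit_small by (auto; lra). rewrite mmul_1r.
  destruct (is_sign_pow (p - 1)) as [-> | ->];
    unfold mscale, mmul, Emat, Sinv, Smat, Tmat; simpl; f_equal; ring.
Qed.

Lemma tail_link_Smat x : link (Smat p) x.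
Proof. destruct x; [apply tail_link_Smat_finite | apply tail_link_Smat_inf]. Qed.

Lemma tail_link_Sinv x : link (Sinv p) x.
Proof.
  assert (HS : mmul (Sinv p) (Smat p) = mscale 1 mid) by mat_ring.
  assert (HS' : mmul (Smat p) (Sinv p) = mscale 1 mid) by mat_ring.
  replace x with (mact (Smat p) (mact (Sinv p) x)).
  - apply (tail_link_inv p (Smat p) (Sinv p) 1); auto;
      [left; auto | rewrite mdet_Smat; lra | apply tail_link_Smat].
  - rewrite <- mact_mmul, HS', mact_mscale, mact_mid by (rewrite ?mdet_Sinv; lra). auto.
Qed.

Lemma tail_link_Tmat_sym x : link Tmat x -> link Tmat (mact Tmat x).
Proof.
  intros H. apply (tail_link_inv p Tmat Tmat (-1)); auto;
    [right; auto | rewrite mdet_Tmat; lra | apply Tmat_sqr | apply Tmat_sqr].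
Qed.

Lemma tail_link_Tmat_neg y : - lam p <= y < 0 -> link Tmat (Some y).
Proof.
  intros Hy. replace Tmat with (cf_step p (Some y)); [apply tail_link_cf_step|].
  simpl. rewrite (rdigit_unique p hp y 0) by (simpl; lra).
  unfold Tmat. f_equal. simpl; ring.
Qed.

Lemma tail_link_Tmat_large y : 1 / lam p <= y -> link Tmat (Some y).
Proof.
  intros Hy. assert (Hy0 : 0 < y) by (unfold Rdiv in Hy; pose proof (Rinv_0_lt_compat _ lam_pos); lra).
  replace (Some y) with (mact Tmat (Some (-1 / y))).
  2: { rewrite mact_Tmat; [f_equal; field; lra|]. unfold Rdiv. intro Hc.
       apply Rmult_integral in Hc. destruct Hc as [Hc|Hc]; [lra | apply Rinv_neq_0_compat in Hc; lra]. }
  apply tail_link_Tmat_sym, tail_link_Tmat_neg. split.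
  - apply (Rmult_le_reg_r y); auto. replace (-1 / y * y) with (-1) by (field; lra).
    apply Rmult_le_compat_l with (r := lam p) in Hy; [|lra].
    replace (lam p * (1 / lam p)) with 1 in Hy by (field; lra). lra.
  - apply Rdiv_neg_pos; lra.
Qed.

Lemma tail_link_Emat_small z : 0 <= z < lam p -> link E (Some z).
Proof. intros. rewrite <- (cf_step_small p hp z) by auto. apply tail_link_cf_step. Qed.

Lemma Emat_pow_mact_large u : lam p < u -> forall k, (2 <= k <= p - 1)%nat ->
  exists z, mact (mpow E k) (Some u) = Some z /\ zero_orbit p (k - 1) < z < zero_orbit p k.
Proof.
  intros Hu k Hk. induction k as [|k IH]; [lia|].
  change (mpow E (S k)) with (mmul E (mpow E k)).
  rewrite mact_mmul by (rewrite mdet_mpow; [lra | apply mdet_Emat]).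
  destruct (Nat.eq_dec k 1) as [->|Hk1].
  - simpl. rewrite mmul_1r, mact_Emat by lra. rewrite mact_Emat.
    2: { unfold Rdiv. rewrite Rmult_1_l. pose proof (Rinv_lt_0_compat (lam p - u)). lra. }
    eexists; split; [reflexivity|]. rewrite zero_orbit_1, zero_orbit_2 by auto.
    assert (1 / (lam p - u) < 0) by (unfold Rdiv; rewrite Rmult_1_l; apply Rinv_lt_0_compat; lra).
    split; [apply Rdiv_lt_0_compat; lra|].
    unfold Rdiv. rewrite !Rmult_1_l. apply Rinv_lt_contravar; [nra | lra].
  - destruct IH as [z [Hz1 Hz2]]; [lia|]. rewrite Hz1.
    assert (Hk2 : zero_orbit p k < lam p) by (apply zero_orbit_lt_lam; auto; lia).
    rewrite mact_Emat by lra. eexists; split; [reflexivity|].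
    destruct (zero_orbit_rec p hp (k - 1) ltac:(lia)) as [A1 A2].
    replace (S (k - 1)) with k in A2 by lia.
    destruct (zero_orbit_rec p hp k ltac:(lia)) as [B1 B2].
    replace (S k - 1)%nat with k by lia. rewrite A2 in Hz2 |- *. rewrite B2.
    unfold Rdiv in *. rewrite !Rmult_1_l in *.
    split; apply Rinv_lt_contravar; nra.
Qed.

(* Since [E^p = +-1], [E] at [E u] is inverse to [E^(p-1)] at [E^2 u], whose factors act
   on the points [E^k u] of [[0, lam)], where [E] is the continued-fraction step. *)
Lemma tail_link_Emat_large u : lam p < u -> link E (Some u) -> link E (mact E (Some u)).
Proof.
  intros Hu HE. set (w := mact E (Some u)).
  assert (HdE : mdet E <> 0) by (rewrite mdet_Emat; lra).
  assert (Hdp : forall n, mdet (mpow E n) <> 0) by (intros; rewrite mdet_mpow; [lra | apply mdet_Emat]).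
  assert (Hsign := is_sign_pow (S p)).
  assert (H1 : link (mpow E (p - 1)) (mact E w)).
  { apply (tail_link_mpow p hp); [apply mdet_Emat|]. intros i Hi.
    unfold w. rewrite <- !mact_mmul, <- !mmul_assoc by auto.
    replace (mmul (mpow E i) (mmul E E)) with (mpow E (i + 2))
      by (rewrite mpow_add; simpl; rewrite !mmul_1r; auto).
    destruct (Nat.eq_dec i (p - 2)) as [->|Hi2].
    - replace (p - 2 + 2)%nat with p by lia.
      rewrite Emat_pow_p, mact_mscale, mact_mid by (auto; apply is_sign_neq0; auto). auto.
    - destruct (Emat_pow_mact_large u Hu (i + 2) ltac:(lia)) as [z [Hz1 Hz2]].
      rewrite Hz1. apply tail_link_Emat_small.
      pose proof (zero_orbit_nonneg p hp (i + 2 - 1) ltac:(lia)).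
      pose proof (zero_orbit_le_lam p hp (i + 2) ltac:(lia)). lra. }
  assert (Hp1 : mmul E (mpow E (p - 1)) = mscale ((-1) ^ S p) mid).
  { rewrite <- Emat_pow_p by auto. change (mmul E (mpow E (p - 1))) with (mpow E (S (p - 1))).
    f_equal. lia. }
  assert (Hp2 : mmul (mpow E (p - 1)) E = mscale ((-1) ^ S p) mid).
  { rewrite <- Emat_pow_p, <- mpow_Sr by auto. f_equal. lia. }
  pose proof (tail_link_inv p _ _ _ _ Hsign (Hdp (p - 1)%nat) Hp1 Hp2 H1) as H2.
  rewrite <- mact_mmul, Hp2, mact_mscale, mact_mid in H2 by (auto; apply is_sign_neq0; auto).
  exact H2.
Qed.

(* [E = T S^-1] links [w + lam] to [-1/w - lam] and [T = E S] links that to [-1/w]. *)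
Lemma tail_link_Tmat_descent w : 0 < w ->
  link Tmat (Some w) -> link Tmat (Some (w / (1 + lam p * w))).
Proof.
  intros Hw HT.
  assert (HE : link E (Some (w + lam p))).
  { replace E with (mmul Tmat (Sinv p)) by (unfold mmul, Tmat, Sinv, Emat; simpl; f_equal; ring).
    apply (tail_link_mmul p hp); [rewrite mdet_Tmat; lra | rewrite mdet_Sinv; lra | apply tail_link_Sinv|].
    rewrite mact_Sinv. replace (w + lam p - lam p) with w by ring. auto. }
  apply tail_link_Emat_large in HE; [|lra]. rewrite mact_Emat in HE by lra.
  assert (HT' : link Tmat (Some (-1 / w - lam p))).
  { replace Tmat with (mmul E (Smat p)) by (unfold mmul, Tmat, Smat, Emat; simpl; f_equal; ring).
    apply (tail_link_mmul p hp); [rewrite mdet_Emat; lra | rewrite mdet_Smat; lra | apply tail_link_Smat|].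
    rewrite mact_Smat. replace (-1 / w - lam p + lam p) with (1 / (lam p - (w + lam p)))
      by (field; lra). auto. }
  apply tail_link_Tmat_sym in HT'.
  assert (Hneg : -1 / w < 0) by (apply Rdiv_neg_pos; lra).
  rewrite mact_Tmat in HT' by lra.
  replace (w / (1 + lam p * w)) with (-1 / (-1 / w - lam p)); auto.
  field. repeat split; nra.
Qed.

(* Induction on [1/v] in steps of [lam]: [v = w / (1 + lam w)] where [1/w = 1/v - lam]. *)
Lemma tail_link_Tmat_pos_bounded n v : 0 < v -> 1 / v <= INR (S n) * lam p ->
  link Tmat (Some v).
Proof.
  revert v. induction n as [|n IH]; intros v Hv Hb.
  - apply tail_link_Tmat_large. simpl in Hb. rewrite Rmult_1_l in Hb.
    apply (Rmult_le_reg_r (lam p / v)); [apply Rdiv_lt_0_compat; lra|].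
    replace (1 / lam p * (lam p / v)) with (1 / v) by (field; lra).
    replace (v * (lam p / v)) with (lam p) by (field; lra). auto.
  - destruct (Rle_lt_dec (1 / lam p) v) as [Hl|Hl]; [apply tail_link_Tmat_large; auto|].
    assert (Hlv : lam p * v < 1).
    { apply (Rmult_lt_compat_l (lam p)) in Hl; auto.
      replace (lam p * (1 / lam p)) with 1 in Hl by (field; lra). lra. }
    assert (Hv' : lam p < 1 / v).
    { apply (Rmult_lt_reg_r v); auto. replace (1 / v * v) with 1 by (field; lra). lra. }
    set (w := 1 / (1 / v - lam p)).
    assert (Hw : 0 < w) by (apply Rdiv_lt_0_compat; lra).
    replace v with (w / (1 + lam p * w)).
    + apply tail_link_Tmat_descent; auto. apply IH; auto.
      unfold w. replace (1 / (1 / (1 / v - lam p))) with (1 / v - lam p) by (field; lra).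
      rewrite !S_INR in *. lra.
    + unfold w. field. repeat split; lra.
Qed.

Lemma tail_link_Tmat_pos v : 0 < v -> link Tmat (Some v).
Proof.
  intros Hv. destruct (INR_unbounded (1 / v / lam p)) as [n Hn].
  apply (tail_link_Tmat_pos_bounded n); auto.
  apply (Rmult_lt_compat_r (lam p)) in Hn; auto.
  replace (1 / v / lam p * lam p) with (1 / v) in Hn by (field; lra).
  rewrite S_INR. nra.
Qed.

Lemma tail_link_Tmat x : link Tmat x.
Proof.
  destruct x as [y|].
  2: { exists 0%nat, 1%nat, 1. split; [left; auto|].
       replace (mact Tmat None) with (Some 0)
         by (unfold mact, dehom, mvec, hom, Tmat; simpl; destruct (Req_EM_T _ 0); [lra | f_equal; field]).
       simpl. rewrite mmul_1l, mmul_1r, mscale_1. auto. }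
  destruct (Rtotal_order y 0) as [Hy|[Hy|Hy]].
  - replace (Some y) with (mact Tmat (Some (-1 / y))).
    + apply tail_link_Tmat_sym, tail_link_Tmat_pos, Rdiv_neg_neg; lra.
    + rewrite mact_Tmat; [f_equal; field; lra|].
      apply Rgt_not_eq, Rdiv_neg_neg; lra.
  - subst. exists 1%nat, 0%nat, (-1). split; [right; auto|].
    replace (mact Tmat (Some 0)) with (@None R)
      by (rewrite mact_Some; simpl; destruct (Req_EM_T _ 0); [auto | lra]).
    simpl. rewrite mmul_1r. apply Tmat_sqr.
  - apply tail_link_Tmat_pos; auto.
Qed.

Lemma tail_link_Tinv x : link Tinv x.
Proof.
  replace Tinv with (mscale (-1) Tmat) by (unfold mscale, Tinv, Tmat; simpl; f_equal; ring).
  apply tail_link_mscale; [right; auto | apply tail_link_Tmat].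
Qed.

End Generators.

Section GroupGp.
Variable p : nat.
Hypothesis hp : (3 <= p)%nat.

Lemma mdet_inGp V : inGp p V -> mdet V = 1.
Proof.
  induction 1; rewrite ?mdet_mmul, ?IHinGp; unfold mdet, mid, Smat, Sinv, Tmat, Tinv; simpl; ring.
Qed.

Lemma mdet_inGp_neq0 V : inGp p V -> mdet V <> 0.
Proof. intros H. rewrite mdet_inGp by auto. lra. Qed.

Lemma inGp_mmul A B : inGp p A -> inGp p B -> inGp p (mmul A B).
Proof.
  intros HA HB. induction HA; [rewrite mmul_1l; auto | ..];
    rewrite <- mmul_assoc; constructor; auto.
Qed.

Lemma tail_link_inGp V x : inGp p V -> tail_link p V x.
Proof.
  intros H. revert x.
  induction H as [| M HM IH | M HM IH | M HM IH | M HM IH]; intros x; [apply tail_link_mid|..];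
    apply (tail_link_mmul p hp); auto using mdet_inGp_neq0.
  - rewrite mdet_Smat; lra.
  - apply tail_link_Smat; auto.
  - rewrite mdet_Sinv; lra.
  - apply tail_link_Sinv; auto.
  - rewrite mdet_Tmat; lra.
  - apply tail_link_Tmat; auto.
  - rewrite mdet_Tinv; lra.
  - apply tail_link_Tinv; auto.
Qed.

Lemma inGp_orbits_merge V x y : inGp p V -> mact V (Some x) = Some y ->
  exists m n, rho_iter p m y = rho_iter p n x.
Proof.
  intros HV Hxy. destruct (tail_link_inGp V (Some x) HV) as [m [n [s [Hs H]]]].
  pose proof (tail_link_orbits p hp V (Some x) m n s (mdet_inGp_neq0 V HV) Hs H) as Horb.
  rewrite Hxy, !rhox_iter_Some in Horb. injection Horb. eauto.
Qed.

Definition Spow (z : Z) : mat2 := Mat2 1 (IZR z * lam p) 0 1.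

Lemma inGp_Spow_nat n : inGp p (Spow (Z.of_nat n)) /\ inGp p (Spow (- Z.of_nat n)).
Proof.
  induction n as [|n [H1 H2]].
  - replace (Spow (Z.of_nat 0)) with mid by (unfold Spow, mid; f_equal; simpl; ring).
    replace (Spow (- Z.of_nat 0)) with mid by (unfold Spow, mid; f_equal; simpl; ring).
    split; apply Gp_id.
  - rewrite Nat2Z.inj_succ. split.
    + replace (Spow (Z.succ (Z.of_nat n))) with (mmul (Smat p) (Spow (Z.of_nat n)));
        [constructor; auto|].
      unfold Spow, mmul, Smat. rewrite succ_IZR. simpl. f_equal; ring.
    + replace (Spow (- Z.succ (Z.of_nat n))) with (mmul (Sinv p) (Spow (- Z.of_nat n)));
        [constructor; auto|].
      unfold Spow, mmul, Sinv. rewrite !opp_IZR, succ_IZR. simpl. f_equal; ring.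
Qed.

Lemma inGp_Spow z : inGp p (Spow z).
Proof.
  destruct (Z.le_ge_cases 0 z).
  - rewrite <- (Z2Nat.id z) by auto. apply inGp_Spow_nat.
  - replace z with (- Z.of_nat (Z.to_nat (- z)))%Z by (rewrite Z2Nat.id; lia).
    apply inGp_Spow_nat.
Qed.

Lemma inGp_cf_step x : inGp p (cf_step p (Some x)).
Proof.
  replace (cf_step p (Some x)) with (mmul Tmat (Spow (- rdigit p x))).
  - apply inGp_mmul; [|apply inGp_Spow].
    rewrite <- mmul_1r. repeat constructor.
  - unfold mmul, Tmat, Spow. rewrite opp_IZR. simpl. f_equal; ring.
Qed.

Lemma inGp_cf_mat n x : inGp p (cf_mat p n (Some x)).
Proof.
  induction n as [|n IH]; simpl; [constructor|].
  rewrite rhox_iter_Some. apply inGp_mmul; [apply inGp_cf_step | auto].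
Qed.

End GroupGp.

Section Tracking.
Variable p : nat.
Hypothesis hp : (3 <= p)%nat.
Variable b : R.
Hypothesis hb : lam p <= b.

Let lam_pos := lam_pos p hp.
Local Notation e := (zero_orbit p).

(* Invariant of the images of points of [[0, lam]] under the steps along the orbit of [b]:
   the bound [e j <= rho^n b] keeps the next step defined, and the bound is attained only
   while [b] shadows [lam]. *)
Definition tracked (n : nat) (z : R) : Prop :=
  exists j, (2 <= j <= p - 1)%nat /\ 0 <= z <= e j /\ e j <= rho_iter p n b /\
    (z < e j \/ (z = rho_iter p n (lam p) /\
                 forall i, (i < n)%nat -> cf_digit p b i = cf_digit p (lam p) i)).

Lemma tracked_0 z : 0 <= z <= lam p -> tracked 0 z.
Proof.
  intros Hz. exists (p - 1)%nat. rewrite zero_orbit_pred by auto. simpl.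
  split; [lia|]. split; [lra|]. split; [lra|].
  destruct (Rlt_le_dec z (lam p)); [left | right]; auto.
  split; [lra | intros; lia].
Qed.

Lemma mact_cf_step_Some x z : z < IZR (rdigit p x) * lam p ->
  mact (cf_step p (Some x)) (Some z) = Some (1 / (IZR (rdigit p x) * lam p - z)).
Proof. intros H. apply mact_Some_eq; simpl; [lra | field; lra]. Qed.

Lemma tracked_step_large n z : lam p <= rho_iter p n b -> tracked n z ->
  let r := IZR (rdigit p (rho_iter p n b)) in
  z < r * lam p /\ tracked (S n) (1 / (r * lam p - z)).
Proof.
  intros Hx [j [Hj [Hz [Hjx Hcase]]]] r.
  assert (Hr : 2 <= r) by (apply IZR_le, rdigit_ge2; auto).
  assert (Hjl : e j <= lam p) by (apply zero_orbit_le_lam; auto; lia).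
  assert (Hd : lam p <= r * lam p - z) by nra.
  split; [lra|]. exists 2%nat. rewrite zero_orbit_2 by auto.
  assert (Hinv : 1 / (r * lam p - z) <= 1 / lam p)
    by (apply Rmult_le_compat_l; [lra | apply Rinv_le_contravar; lra]).
  split; [lia|]. split; [split; [left; apply Rdiv_lt_0_compat|]; lra|].
  split; [unfold Rdiv; rewrite Rmult_1_l; apply rho_ge_inv_lam; auto|].
  destruct (Req_dec (r * lam p - z) (lam p)) as [Heq|Hneq].
  - assert (Hz2 : z = lam p /\ r = 2) by nra. destruct Hz2 as [-> Hr2].
    destruct Hcase as [Hlt|[Hzl Hdig]]; [lra|]. right. split.
    + simpl. rewrite <- Hzl, rho_lam, Heq, rho_small by (auto; lra). f_equal. ring.
    + intros i Hi. destruct (Nat.eq_dec i n) as [->|Hin]; [|apply Hdig; lia].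
      unfold cf_digit. rewrite <- Hzl, rdigit_lam by auto. apply eq_IZR. auto.
  - left. apply Rmult_lt_compat_l; [lra | apply Rinv_lt_contravar; nra].
Qed.

Lemma tracked_step_small n z : rho_iter p n b < lam p -> tracked n z ->
  let r := IZR (rdigit p (rho_iter p n b)) in
  z < r * lam p /\ tracked (S n) (1 / (r * lam p - z)).
Proof.
  intros Hx [j [Hj [Hz [Hjx Hcase]]]] r.
  assert (Hj2 : (j <= p - 2)%nat).
  { destruct (Nat.eq_dec j (p - 1)) as [->|]; [rewrite zero_orbit_pred in Hjx by auto; lra | lia]. }
  assert (Hx0 : 0 <= rho_iter p n b) by (pose proof (zero_orbit_nonneg p hp j); lra).
  assert (Hr1 : r = 1) by (unfold r; rewrite rdigit_small by (auto; lra); auto).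
  rewrite Hr1, Rmult_1_l.
  destruct (zero_orbit_rec p hp j ltac:(lia)) as [Hpos Hnext].
  split; [lra|]. exists (S j). split; [lia|].
  split; [split; [left; apply Rdiv_lt_0_compat; lra|]|].
  { rewrite Hnext. apply Rmult_le_compat_l; [lra | apply Rinv_le_contravar; lra]. }
  split.
  { simpl. rewrite Hnext, rho_small by (auto; lra).
    apply Rmult_le_compat_l; [lra | apply Rinv_le_contravar; lra]. }
  destruct Hcase as [Hlt|[Hzl Hdig]].
  - left. rewrite Hnext. apply Rmult_lt_compat_l; [lra | apply Rinv_lt_contravar; nra].
  - right. assert (Hzsmall : 0 <= z < lam p) by lra. split.
    + simpl. rewrite <- Hzl, rho_small; auto.
    + intros i Hi. destruct (Nat.eq_dec i n) as [->|Hin]; [|apply Hdig; lia].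
      unfold cf_digit. rewrite <- Hzl, !rdigit_small by (auto; lra). auto.
Qed.

Lemma cf_mat_mact_tracked n z : 0 <= z <= lam p ->
  exists z', mact (cf_mat p n (Some b)) (Some z) = Some z' /\ tracked n z'.
Proof.
  intros Hz. induction n as [|n [z' [Hz' Htr]]].
  - exists z. split; [apply mact_mid | apply tracked_0; auto].
  - simpl. rewrite mact_mmul, Hz', rhox_iter_Some by apply mdet_cf_mat_neq0.
    destruct (Rle_lt_dec (lam p) (rho_iter p n b)) as [Hx|Hx];
      [destruct (tracked_step_large n z' Hx Htr) as [Hlt Htr']
      | destruct (tracked_step_small n z' Hx Htr) as [Hlt Htr']];
      eexists; (split; [apply mact_cf_step_Some; eauto | exact Htr']).
Qed.

End Tracking.

Section ReducedCycles.
Variable p : nat.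
Hypothesis hp : (3 <= p)%nat.

Let lam_pos := lam_pos p hp.

Lemma cf_digit_lam_period q j : cf_digit p (lam p) (j + q * (p - 2)) = cf_digit p (lam p) j.
Proof. rewrite !cf_digit_lam, Nat.Div0.mod_add by auto. reflexivity. Qed.

Lemma special_period_of_lam_digits x :
  (forall j, cf_digit p x j = cf_digit p (lam p) j) -> special_period p x.
Proof. intros H. exists 0%nat. split; [lia|]. intros j. rewrite H. apply cf_digit_lam; auto. Qed.

Lemma cf_digit_rho_iter_period x k n j : (forall j, cf_digit p x (j + k) = cf_digit p x j) ->
  cf_digit p (rho_iter p (n * k) x) j = cf_digit p x j.
Proof.
  intros Hper. rewrite <- cf_digit_add. induction n as [|n IH]; [f_equal; lia|].
  replace (j + S n * k)%nat with (j + n * k + k)%nat by lia. rewrite Hper. auto.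
Qed.

Lemma cf_mat_maps_interval b n z : lam p <= b -> 0 <= z <= lam p ->
  exists z', mact (cf_mat p n (Some b)) (Some z) = Some z' /\ 0 <= z' <= lam p.
Proof.
  intros Hb Hz. destruct (cf_mat_mact_tracked p hp b Hb n z Hz) as [z' [Hz' [j [Hj [Hj' _]]]]].
  exists z'. split; auto. pose proof (zero_orbit_le_lam p hp j ltac:(lia)). lra.
Qed.

Lemma cf_mat_period_lam_lt b k : lam p <= b -> (1 <= k)%nat ->
  (forall j, cf_digit p b (j + k) = cf_digit p b j) -> ~ special_period p b ->
  exists z', mact (cf_mat p k (Some b)) (Some (lam p)) = Some z' /\ z' < lam p.
Proof.
  intros Hb Hk Hper Hns.
  destruct (cf_mat_mact_tracked p hp b Hb k (lam p) ltac:(lra))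
    as [z' [Hz' [j [Hj [Hj' [_ [Hlt|[Hz'l Hdig]]]]]]]]; exists z'; split; auto.
  - pose proof (zero_orbit_le_lam p hp j ltac:(lia)). lra.
  - destruct (rho_iter_lam_range p hp k) as [[_ Hle] Hcyc].
    destruct Hle as [Hle|Heq]; [lra|]. exfalso. apply Hns, special_period_of_lam_digits.
    apply (periodic_agree _ _ k); auto.
    apply Hcyc, Nat.Div0.mod_divides in Heq. destruct Heq as [q ->].
    intro j'. rewrite Nat.mul_comm. apply cf_digit_lam_period.
Qed.

(* The matrix of one digit period is a Moebius map of [[0, lam]] into itself with a fixed
   point below [lam], and the iterates [rho^(n k) b], which stay in [[lam, r_0 lam)], form
   one of its orbits. *)
Lemma rho_iter_digit_period b k : lam p <= b -> (1 <= k)%nat ->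
  (forall j, cf_digit p b (j + k) = cf_digit p b j) -> ~ special_period p b ->
  rho_iter p k b = b.
Proof.
  intros Hb Hk Hper Hns.
  pose proof (mdet_cf_mat p k (Some b)) as Hdet.
  pose proof (cf_mat_maps_interval b k) as Hmap.
  pose proof (cf_mat_period_lam_lt b k Hb Hk Hper Hns) as HfL.
  destruct (cf_mat p k (Some b)) as [a b' c d] eqn:HM. unfold mdet in Hdet; simpl in Hdet.
  assert (Hmap' : forall z, 0 <= z <= lam p ->
    c * z + d <> 0 /\ 0 <= (a * z + b') / (c * z + d) <= lam p).
  { intros z Hz. destruct (Hmap z Hb Hz) as [z' [Hz' Hr]].
    apply maps_to_mact in Hz' as [Hden ->]. auto. }
  destruct HfL as [zL [HzL HzLlt]]. apply maps_to_mact in HzL as [_ HzL]. simpl in HzL.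
  rewrite HzL in HzLlt.
  destruct (mobius_fixed_point a b' c d (lam p) lam_pos Hmap' HzLlt) as [w [Hw Hfix]].
  set (X := fun n => rho_iter p (n * k) b).
  assert (HXd : forall n j, cf_digit p (X n) j = cf_digit p b j)
    by (intros; apply cf_digit_rho_iter_period; auto).
  enough (HX : X 1%nat = X 0%nat) by (unfold X in HX; simpl in HX; rewrite Nat.add_0_r in HX; auto).
  apply (mobius_orbit_stationary a b' c d (lam p) (IZR (rdigit p b) * lam p) w X); auto;
    [intros z Hz; apply Hmap'; auto | intro n .. ].
  - pose proof (rdigit_spec p hp (X n)) as Hs. specialize (HXd n 0%nat). unfold cf_digit in HXd.
    simpl in HXd. rewrite HXd in Hs. pose proof (rdigit_ge2 p hp b Hb) as H2.
    apply IZR_le in H2. simpl in H2. split; nra.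
  - rewrite <- (cf_mat_digits p k (X n) b) in HM by (intros; apply HXd).
    pose proof (mact_cf_mat p hp k (Some (X n))) as Hact.
    rewrite HM, rhox_iter_Some in Hact. apply maps_to_mact in Hact as [Hden Hval]. simpl in *.
    split; auto. rewrite <- Hval. unfold X. rewrite <- rho_iter_add. f_equal.
Qed.

Lemma reduced_rho b : Gp_reduced p b -> Gp_reduced p (rho p b).
Proof.
  intros [[k [Hk Hper]] Hns]. split.
  - exists k. split; auto. intros j. rewrite !cf_digit_rho.
    replace (S (j + k)) with (S j + k)%nat by lia. apply Hper.
  - intros [c [Hc Hsp]]. apply Hns. exists ((c + 1) mod (p - 2))%nat.
    split; [apply Nat.mod_upper_bound; lia|].
    apply (rotated_pattern_pred (cf_digit p b) (p - 2) c k); auto.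
    intros j. rewrite <- cf_digit_rho. apply Hsp.
Qed.

Lemma reduced_rho_iter n b : Gp_reduced p b -> Gp_reduced p (rho_iter p n b).
Proof. induction n; simpl; auto. intros; apply reduced_rho; auto. Qed.

Lemma zero_orbit_le_rho_iter b n : (1 <= n <= p - 2)%nat ->
  (forall s, (1 <= s < n)%nat -> cf_digit p b s = 1%Z) ->
  zero_orbit p (S n) <= rho_iter p n b.
Proof.
  intros Hn Hone. induction n as [|n IH]; [lia|].
  destruct (Nat.eq_dec n 0) as [->|Hn0].
  - rewrite zero_orbit_2 by auto. simpl. pose proof (rho_ge_inv_lam p hp b). unfold Rdiv. lra.
  - specialize (IH ltac:(lia) ltac:(intros; apply Hone; lia)). simpl rho_iter.
    pose proof (Hone n ltac:(lia)) as Hd. unfold cf_digit in Hd.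
    pose proof (rdigit_spec p hp (rho_iter p n b)) as Hs. rewrite Hd in Hs. simpl in Hs.
    pose proof (zero_orbit_nonneg p hp (S n) ltac:(lia)).
    rewrite rho_small by (auto; lra).
    destruct (zero_orbit_rec p hp (S n) ltac:(lia)) as [_ ->].
    apply Rmult_le_compat_l; [lra | apply Rinv_le_contravar; lra].
Qed.

Lemma exists_large_digit b : exists s, (1 <= s <= p - 2)%nat /\ (2 <= cf_digit p b s)%Z.
Proof.
  apply NNPP. intros Hnone.
  assert (Hone : forall s, (1 <= s <= p - 2)%nat -> cf_digit p b s = 1%Z).
  { intros s Hs. pose proof (cf_digit_ge1 p hp b s ltac:(lia)).
    destruct (Z.eq_dec (cf_digit p b s) 1); auto.
    exfalso. apply Hnone. exists s. split; [auto | lia]. }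
  pose proof (zero_orbit_le_rho_iter b (p - 2) ltac:(lia) ltac:(intros; apply Hone; lia)) as Hl.
  replace (S (p - 2)) with (p - 1)%nat in Hl by lia. rewrite zero_orbit_pred in Hl by auto.
  pose proof (rdigit_ge2 p hp _ Hl). specialize (Hone (p - 2)%nat ltac:(lia)).
  unfold cf_digit in Hone. lia.
Qed.

Lemma reduced_periodic b : Gp_reduced p b -> exists m, (1 <= m)%nat /\ rho_iter p m b = b.
Proof.
  intros Hred. destruct Hred as [[k [Hk Hper]] Hns]. exists k. split; auto.
  destruct (exists_large_digit b) as [s [Hs Hd]].
  assert (Hcyc : rho_iter p k (rho_iter p s b) = rho_iter p s b).
  { apply rho_iter_digit_period; auto.
    - apply lam_le_of_rdigit_ge2; auto.
    - intros j. rewrite <- !cf_digit_add. replace (j + k + s)%nat with (j + s + k)%nat by lia.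
      apply Hper.
    - apply (reduced_rho_iter s b). split; [exists k; auto | auto]. }
  assert (Hdig : forall j, (j < s)%nat -> cf_digit p (rho_iter p k b) j = cf_digit p b j)
    by (intros j _; rewrite <- cf_digit_add; apply Hper).
  apply (mact_inj (cf_mat p s (Some b)) _ _ (rho_iter p s b)); [apply mdet_cf_mat_neq0 | |].
  - rewrite <- (cf_mat_digits p s _ _ Hdig), mact_cf_mat, rhox_iter_Some by auto.
    rewrite <- rho_iter_add, Nat.add_comm, rho_iter_add, Hcyc. auto.
  - rewrite mact_cf_mat, rhox_iter_Some by auto. auto.
Qed.

End ReducedCycles.

Section HyperbolicCycles.
Variable p : nat.
Hypothesis hp : (3 <= p)%nat.


Lemma trace_cf_mat_cycle_rho y k : rho_iter p k y = y ->
  trace (cf_mat p k (Some (rho p y))) = trace (cf_mat p k (Some y)).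
Proof.
  intros Hy. symmetry. rewrite <- (Rmult_1_l (trace (cf_mat p k (Some (rho p y))))).
  apply (trace_conj (cf_step p (Some y))); [apply mdet_cf_step|].
  rewrite mscale_1.
  replace (cf_step p (Some y)) with (cf_step p (rhox_iter p k (Some y))) at 1
    by (rewrite rhox_iter_Some, Hy; auto).
  change (mmul (cf_step p (rhox_iter p k (Some y))) (cf_mat p k (Some y)))
    with (cf_mat p (S k) (Some y)).
  apply cf_mat_Sr.
Qed.

Lemma trace_cf_mat_cycle_iter y k t : rho_iter p k y = y ->
  trace (cf_mat p k (Some (rho_iter p t y))) = trace (cf_mat p k (Some y)).
Proof.
  intros Hy. induction t as [|t IH]; auto. simpl. rewrite trace_cf_mat_cycle_rho; auto.
  rewrite <- rho_iter_add, Nat.add_comm, rho_iter_add, Hy. auto.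
Qed.

Lemma trace_cf_mat_lam_cycle k : rho_iter p k (lam p) = lam p ->
  ~ Rabs (trace (cf_mat p k (Some (lam p)))) > 2.
Proof.
  intros Hk. apply (rho_iter_lam_range p hp k), Nat.Div0.mod_divides in Hk as [q ->].
  rewrite Nat.mul_comm. destruct (cf_mat_lam_cycles p hp q) as [s [Hs ->]].
  rewrite trace_mscale, trace_lam_parabolic. apply is_sign_abs_trace2; auto.
Qed.

Lemma cf_mat_relation_swap M x m n s : mdet M = 1 -> is_sign s ->
  mmul (cf_mat p m x) M = mscale s (cf_mat p n x) ->
  mmul (cf_mat p n x) (madj M) = mscale s (cf_mat p m x).
Proof.
  intros HM Hs H.
  assert (HMM : mmul M (madj M) = mid)
    by (destruct M; unfold mdet in HM; unfold mmul, madj, mid; simpl in *; f_equal; lra).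
  assert (H' : cf_mat p m x = mscale s (mmul (cf_mat p n x) (madj M))).
  { rewrite <- (mmul_1r (cf_mat p m x)), <- HMM, mmul_assoc, H, mmul_scale_l. auto. }
  rewrite H', mscale_mscale, is_sign_sqr, mscale_1 by auto. auto.
Qed.

Lemma cycle_of_cf_mat_relation x M m n s : (m <= n)%nat ->
  rho_iter p m x = rho_iter p n x ->
  mmul (cf_mat p m (Some x)) M = mscale s (cf_mat p n (Some x)) ->
  rho_iter p (n - m) (rho_iter p m x) = rho_iter p m x /\
  trace M = s * trace (cf_mat p (n - m) (Some (rho_iter p m x))).
Proof.
  intros Hmn Horb H. split.
  - rewrite <- rho_iter_add. replace (n - m + m)%nat with n by lia. auto.
  - apply (trace_conj (cf_mat p m (Some x))); [apply mdet_cf_mat|].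
    rewrite H, <- rhox_iter_Some, <- cf_mat_add. do 2 f_equal. lia.
Qed.

(* The element fixing [a] is conjugate, up to sign, to the matrix of one turn of the cycle
   that the rho-orbit of [a] eventually enters. *)
Lemma hyperbolic_cycle a : hyperbolic_fixed_point p a ->
  exists n k, (1 <= k)%nat /\ rho_iter p k (rho_iter p n a) = rho_iter p n a /\
    Rabs (trace (cf_mat p k (Some (rho_iter p n a)))) > 2.
Proof.
  intros [M [HM [Htr Hfix]]]. apply maps_to_mact in Hfix.
  destruct (tail_link_inGp p hp M (Some a) HM) as [m [n [s [Hs H]]]].
  pose proof (tail_link_orbits p hp M (Some a) m n s (mdet_inGp_neq0 p M HM) Hs H) as Horb.
  rewrite Hfix, !rhox_iter_Some in Horb. rewrite Hfix in H. injection Horb as Horb.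
  assert (Hrel : exists m' n' M', (m' <= n')%nat /\ rho_iter p m' a = rho_iter p n' a /\
    Rabs (trace M') > 2 /\ mmul (cf_mat p m' (Some a)) M' = mscale s (cf_mat p n' (Some a))).
  { destruct (Nat.le_ge_cases m n) as [Hle|Hge]; [exists m, n, M; auto|].
    exists n, m, (madj M). rewrite trace_madj. repeat split; auto.
    apply cf_mat_relation_swap; auto. apply (mdet_inGp p); auto. }
  destruct Hrel as [m' [n' [M' [Hmn [Horb' [Htr' H']]]]]].
  destruct (cycle_of_cf_mat_relation a M' m' n' s Hmn Horb' H') as [Hcyc HtrM].
  rewrite HtrM, Rabs_mult in Htr'.
  replace (Rabs s) with 1 in Htr'
    by (destruct Hs as [-> | ->]; [rewrite Rabs_R1 | rewrite Rabs_left]; lra).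
  exists m', (n' - m')%nat. repeat split; auto; [|lra].
  destruct (n' - m')%nat eqn:Hk; [|lia]. simpl in Htr'. unfold trace, mid in Htr'; simpl in Htr'.
  rewrite Rabs_right in Htr'; lra.
Qed.

Lemma hyperbolic_cycle_avoids_lam y k t : rho_iter p k y = y ->
  Rabs (trace (cf_mat p k (Some y))) > 2 -> rho_iter p t y <> lam p.
Proof.
  intros Hy Htr Ht. apply (trace_cf_mat_lam_cycle k).
  - rewrite <- Ht, <- rho_iter_add, Nat.add_comm, rho_iter_add, Hy. auto.
  - rewrite <- Ht, trace_cf_mat_cycle_iter; auto.
Qed.

Lemma lam_digits_cycle_eq x k : (1 <= k)%nat -> rho_iter p k x = x ->
  (forall j, cf_digit p x j = cf_digit p (lam p) j) -> x = lam p.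
Proof.
  intros Hk Hx Hdig.
  destruct (cf_mat_lam_cycles p hp k) as [s [Hs Hcyc]].
  apply (lam_parabolic_fixed p hp (INR k) s); auto; [apply lt_0_INR; lia|].
  rewrite <- Hcyc, <- (cf_mat_digits p _ x) by auto.
  rewrite mact_cf_mat, rhox_iter_Some, Nat.mul_comm, rho_iter_mul_period; auto.
Qed.

Lemma special_period_lam_digits x : special_period p x ->
  exists c, forall j, cf_digit p (rho_iter p c x) j = cf_digit p (lam p) j.
Proof.
  intros [c [Hc Hsp]]. exists c. intros j.
  rewrite <- cf_digit_add, Hsp, cf_digit_lam by auto.
  destruct (Nat.eqb_spec ((j + c) mod (p - 2)) c) as [e|e],
    (Nat.eqb_spec (j mod (p - 2)) 0) as [f|f]; auto;
    [apply mod_add_small_iff in e | apply (mod_add_small_iff j c) in f]; tauto.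
Qed.

Lemma hyperbolic_reduced_iterate a : hyperbolic_fixed_point p a ->
  exists n, Gp_reduced p (rho_iter p n a).
Proof.
  intros Ha. destruct (hyperbolic_cycle a Ha) as [n [k [Hk [Hcyc Htr]]]].
  exists n. split.
  - exists k. split; auto. intros j. rewrite cf_digit_add, Hcyc. auto.
  - intros Hsp. destruct (special_period_lam_digits _ Hsp) as [c Hc].
    apply (hyperbolic_cycle_avoids_lam _ k c Hcyc Htr).
    apply (lam_digits_cycle_eq _ k); auto.
    rewrite <- rho_iter_add, Nat.add_comm, rho_iter_add, Hcyc. auto.
Qed.

Lemma cycle_of_orbits_merge x g l m n n0 : (1 <= l)%nat -> rho_iter p l g = g ->
  rho_iter p m g = rho_iter p n x -> exists t, g = rho_iter p t (rho_iter p n0 x).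
Proof.
  intros Hl Hg Hmerge. set (q := (m + n0)%nat).
  exists (q * l - m + n - n0)%nat.
  rewrite <- rho_iter_add. replace (q * l - m + n - n0 + n0)%nat with (q * l - m + n)%nat by nia.
  rewrite rho_iter_add, <- Hmerge, <- rho_iter_add.
  replace (q * l - m + m)%nat with (q * l)%nat by nia. symmetry. apply rho_iter_mul_period; auto.
Qed.

Lemma reduced_equiv_on_cycle b g V : Gp_reduced p b -> Gp_reduced p g -> inGp p V ->
  maps_to V b g -> exists n, g = rho_iter p n b.
Proof.
  intros Hb Hg HV Hm. apply maps_to_mact in Hm.
  destruct (inGp_orbits_merge p hp V b g HV Hm) as [m [n Hmerge]].
  destruct (reduced_periodic p hp g Hg) as [l [Hl Hgl]].
  apply (cycle_of_orbits_merge b g l m n 0); auto.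
Qed.

Lemma hyperbolic_class_cycle a : hyperbolic_fixed_point p a ->
  exists b, Gp_reduced p b /\ Gp_equiv p a b /\
    forall g, Gp_reduced p g -> Gp_equiv p a g -> exists n, g = rho_iter p n b.
Proof.
  intros Ha. destruct (hyperbolic_reduced_iterate a Ha) as [n0 Hred].
  exists (rho_iter p n0 a). split; [auto | split].
  - exists (cf_mat p n0 (Some a)). split; [apply inGp_cf_mat; auto|].
    apply maps_to_mact. rewrite mact_cf_mat, rhox_iter_Some; auto.
  - intros g Hg [W [HW Hm]]. apply maps_to_mact in Hm.
    destruct (inGp_orbits_merge p hp W a g HW Hm) as [m [n Hmerge]].
    destruct (reduced_periodic p hp g Hg) as [l [Hl Hgl]].
    apply (cycle_of_orbits_merge a g l m n n0); auto.
Qed.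

End HyperbolicCycles.

Theorem theorem5p1 (p : nat) (hp : (3 <= p)%nat) :
  (* (i) *)
  (forall a, hyperbolic_fixed_point p a ->
     exists n : nat, Gp_reduced p (rho_iter p n a)) /\
  (* (ii) *)
  (forall b, Gp_reduced p b -> Gp_reduced p (rho p b)) /\
  (forall b, Gp_reduced p b -> exists m : nat, (1 <= m)%nat /\ rho_iter p m b = b) /\
  (* (iii) *)
  (forall b g V, Gp_reduced p b -> Gp_reduced p g -> inGp p V -> maps_to V b g ->
     exists n : nat, g = rho_iter p n b) /\
  (* consequence: each class of hyperbolic fixed points contains exactly one cycle *)
  (forall a, hyperbolic_fixed_point p a ->
     exists b, Gp_reduced p b /\ Gp_equiv p a b /\
       forall g, Gp_reduced p g -> Gp_equiv p a g -> exists n : nat, g = rho_iter p n b).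
Proof.
  refine (conj _ (conj _ (conj _ (conj _ _)))).
  - apply hyperbolic_reduced_iterate; auto.
  - apply reduced_rho; auto.
  - apply reduced_periodic; auto.
  - apply reduced_equiv_on_cycle; auto.
  - apply hyperbolic_class_cycle; auto.
Qed.
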